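(* For every Følner sequence $\Phi$ on $\mathbb{N}$ and any $f\in L^2(\mathbb{N},\Phi)$ there are a subsequence $\Psi$ of $\Phi$ and functions $f_{\mathsf{Bes}}\in\mathsf{Bes}(\mathbb{N},\Psi)$ and $f_{\mathsf{anti}}\in\mathsf{Bes}(\mathbb{N},\Psi)^\perp$ such that $f=f_{\mathsf{Bes}}+f_{\mathsf{anti}}$. Moreover, $\|f-f_{\mathsf{Bes}}\|_\Psi=\inf\{\|f-g\|_\Psi: g\in\mathsf{Bes}(\mathbb{N},\Psi)\}$, and if $f$ takes values in an interval $[a,b]$, then so does $f_{\mathsf{Bes}}$.
   Context: A Følner sequence in $\mathbb{N}$ is a sequence $\Phi\colon N\mapsto\Phi_N$ of finite non-empty subsets of $\mathbb{N}$ with $|(\Phi_N+m)\triangle\Phi_N|/|\Phi_N|\to0$ for all $m\in\mathbb{N}$. $\|f\|_\Phi=\big(\limsup_{N\to\infty}\frac{1}{|\Phi_N|}\sum_{n\in\Phi_N}|f(n)|^2\big)^{1/2}$ and $L^2(\mathbb{N},\Phi)=\{f\colon\mathbb{N}\to\mathbb{C}:\|f\|_\Phi<\infty\}$. A trigonometric polynomial is a function $n\mapsto\sum_{j=1}^J c_je^{2\pi i\theta_j n}$ with $c_j\in\mathbb{C}$, $\theta_j\in[0,1)$. $\mathsf{Bes}(\mathbb{N},\Phi)$ is the set of $f\colon\mathbb{N}\to\mathbb{C}$ such that for every $\epsilon>0$ there is a trigonometric polynomial $a$ with $\|f-a\|_\Phi<\epsilon$. $\mathsf{Bes}(\mathbb{N},\Phi)^\perp$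 is the set of $f\in L^2(\mathbb{N},\Phi)$ such that $\lim_{N\to\infty}\frac{1}{|\Phi_N|}\sum_{n\in\Phi_N}f(n)e^{2\pi i n\theta}=0$ for all $\theta\in[0,1)$. *)

From Stdlib Require Import Reals List Arith.
From Coquelicot Require Import Coquelicot.
Import ListNotations.
Open Scope R_scope.

(* Finite subsets of N are represented by duplicate-free lists. *)
Definition memb (x : nat) (A : list nat) : bool :=
  if in_dec Nat.eq_dec x A then true else false.

Definition shift_set (A : list nat) (m : nat) : list nat := map (fun x => (x + m)%nat) A.

Definition symdiff_card (A : list nat) (m : nat) : nat :=
  (length (filter (fun x => negb (memb x A)) (shift_set A m))
   + length (filter (fun x => negb (memb x (shift_set A m))) A))%nat.

Definition Folner (Phi : nat -> list nat) : Prop :=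
  (forall N, NoDup (Phi N)) /\ (forall N, Phi N <> []) /\
  forall m : nat,
    is_lim_seq (fun N => INR (symdiff_card (Phi N) m) / INR (length (Phi N))) 0.

Definition ravg (A : list nat) (g : nat -> R) : R :=
  fold_right Rplus 0 (map g A) / INR (length A).

Definition cavg (A : list nat) (g : nat -> C) : C :=
  Cmult (RtoC (/ INR (length A))) (fold_right Cplus (RtoC 0) (map g A)).

Definition Phinorm (Phi : nat -> list nat) (f : nat -> C) : Rbar :=
  match LimSup_seq (fun N => ravg (Phi N) (fun n => (Cmod (f n)) ^ 2)) with
  | Finite r => Finite (sqrt r)
  | p_infty => p_infty
  | m_infty => m_infty
  end.

Definition L2 (Phi : nat -> list nat) (f : nat -> C) : Prop :=
  Rbar_lt (Phinorm Phi f) p_infty.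

Definition cexp2pi (t : R) : C := (cos (2 * PI * t), sin (2 * PI * t)).

Definition trig_poly (a : nat -> C) : Prop :=
  exists cs : list (C * R),
    (forall p, In p cs -> 0 <= snd p < 1) /\
    forall n : nat,
      a n = fold_right Cplus (RtoC 0) (map (fun p => Cmult (fst p) (cexp2pi (snd p * INR n))) cs).

Definition Bes (Phi : nat -> list nat) (f : nat -> C) : Prop :=
  forall eps : R, 0 < eps ->
    exists a, trig_poly a /\ Rbar_lt (Phinorm Phi (fun n => Cminus (f n) (a n))) (Finite eps).

Definition Bes_perp (Phi : nat -> list nat) (f : nat -> C) : Prop :=
  L2 Phi f /\
  forall theta : R, 0 <= theta < 1 ->
    is_lim_seq (fun N => Cmod (cavg (Phi N) (fun n => Cmult (f n) (cexp2pi (INR n * theta))))) 0.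

Definition subseq_of (Phi Psi : nat -> list nat) : Prop :=
  exists sigma : nat -> nat, (forall N, (sigma N < sigma (S N))%nat) /\
    forall N, Psi N = Phi (sigma N).

From Stdlib Require Import Reals List Arith Lra Lia Permutation ZArith.
From Stdlib Require Import Classical ClassicalEpsilon FunctionalExtensionality.
From Coquelicot Require Import Coquelicot.
Import ListNotations.
Open Scope R_scope.

(* Starting from a subsequence along
   which [msq f] converges, peel off frequencies greedily: pick a frequency whose Fourier
   coefficient of the current residual converges, along a further subsequence, to some [c] at least
   half as large as any coefficient seen frequently, and subtract [c e(-th n)]. This lowers the
   limiting energy by [|c|^2], and the Folner property keeps all earlier coefficients at 0. The
   energies converge, so [c_k -> 0]; after a diagonal extraction the greedy choice forces every
   Fourier coefficient of the final residual to vanish.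
   The Besicovitch part is glued from the partial sums: it is the [j]-th partial sum on a block
   [[T_j, T_(j+1))], and the [j]-th averaging set of the final subsequence lies below [T_(j+1)]
   and gives negligible weight to [[0, T_j)]. Minimality of the distance is Pythagoras. For
   [[a, b]]-valued [f], clamping the Besicovitch part to the range of [f] keeps it Besicovitch and
   only moves it towards [f]. *)

Ltac Cring :=
  apply injective_projections; unfold Cplus, Cmult, Cminus, Copp, Cconj, RtoC; simpl; ring.

Definition Cnorm2 (z : C) : R := fst z * fst z + snd z * snd z.

Lemma Cnorm2_ge_0 z : 0 <= Cnorm2 z.
Proof. unfold Cnorm2; nra. Qed.

Lemma Cmod_Cnorm2 z : Cmod z = sqrt (Cnorm2 z).
Proof. unfold Cmod, Cnorm2; f_equal; ring. Qed.

Lemma Cmod_sqr z : Cmod z ^ 2 = Cnorm2 z.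
Proof. rewrite Cmod_Cnorm2, pow2_sqrt; [ring | apply Cnorm2_ge_0]. Qed.

Lemma Cnorm2_mult a b : Cnorm2 (a * b)%C = Cnorm2 a * Cnorm2 b.
Proof. unfold Cnorm2, Cmult; simpl; ring. Qed.

Lemma Cnorm2_plus_le a b : Cnorm2 (a + b)%C <= 2 * Cnorm2 a + 2 * Cnorm2 b.
Proof.
  unfold Cnorm2, Cplus; simpl.
  pose proof (pow2_ge_0 (fst a - fst b)); pose proof (pow2_ge_0 (snd a - snd b)); nra.
Qed.

Lemma Cnorm2_minus_sym x y : Cnorm2 (x - y)%C = Cnorm2 (y - x)%C.
Proof. unfold Cnorm2, Cminus, Cplus, Copp; simpl; ring. Qed.

Lemma Cnorm2_minus_le a b : Cnorm2 (a - b)%C <= 2 * Cnorm2 a + 2 * Cnorm2 b.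
Proof.
  replace (a - b)%C with (a + - b)%C by Cring.
  replace (Cnorm2 b) with (Cnorm2 (- b)%C) by (unfold Cnorm2; simpl; ring).
  apply Cnorm2_plus_le.
Qed.

Lemma Rabs_fst_le z : Rabs (fst z) <= Cmod z.
Proof. rewrite Cmod_Cnorm2, <- sqrt_Rsqr_abs. apply sqrt_le_1_alt. unfold Rsqr, Cnorm2. nra. Qed.

Lemma Rabs_snd_le z : Rabs (snd z) <= Cmod z.
Proof. rewrite Cmod_Cnorm2, <- sqrt_Rsqr_abs. apply sqrt_le_1_alt. unfold Rsqr, Cnorm2. nra. Qed.

Lemma Cmod_le_Rabs_fst_snd z : Cmod z <= Rabs (fst z) + Rabs (snd z).
Proof.
  rewrite Cmod_Cnorm2. pose proof (Rabs_pos (fst z)); pose proof (Rabs_pos (snd z)).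
  apply Rsqr_incr_0_var; [|lra].
  rewrite Rsqr_sqrt by apply Cnorm2_ge_0. unfold Rsqr, Cnorm2.
  assert (fst z * fst z = Rabs (fst z) * Rabs (fst z)) by (rewrite <- Rabs_mult, Rabs_pos_eq; nra).
  assert (snd z * snd z = Rabs (snd z) * Rabs (snd z)) by (rewrite <- Rabs_mult, Rabs_pos_eq; nra).
  nra.
Qed.

Lemma Rabs_le_inv x M : Rabs x <= M -> -M <= x <= M.
Proof. unfold Rabs; destruct Rcase_abs; lra. Qed.

Definition rsum (A : list nat) (u : nat -> R) : R := fold_right Rplus 0 (map u A).
Definition csum (A : list nat) (g : nat -> C) : C := fold_right Cplus (RtoC 0) (map g A).

Lemma ravg_rsum A u : ravg A u = rsum A u / INR (length A).
Proof. reflexivity. Qed.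

Lemma cavg_csum A g : cavg A g = (RtoC (/ INR (length A)) * csum A g)%C.
Proof. reflexivity. Qed.

Lemma csum_fst A g : fst (csum A g) = rsum A (fun n => fst (g n)).
Proof. induction A; simpl; auto. unfold csum, rsum in *; simpl. rewrite IHA. reflexivity. Qed.

Lemma csum_snd A g : snd (csum A g) = rsum A (fun n => snd (g n)).
Proof. induction A; simpl; auto. unfold csum, rsum in *; simpl. rewrite IHA. reflexivity. Qed.

Lemma rsum_ext A u v : (forall n, In n A -> u n = v n) -> rsum A u = rsum A v.
Proof. unfold rsum; induction A; simpl; intros H; auto. rewrite H, IHA; auto. Qed.

Lemma rsum_le A u v : (forall n, In n A -> u n <= v n) -> rsum A u <= rsum A v.
Proof.
  unfold rsum; induction A; simpl; intros H; [lra|].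
  pose proof (H a (or_introl eq_refl)). assert (IH := IHA (fun n Hn => H n (or_intror Hn))). lra.
Qed.

Lemma rsum_plus A u v : rsum A (fun n => u n + v n) = rsum A u + rsum A v.
Proof. induction A; unfold rsum in *; simpl; [ring|]. rewrite IHA; ring. Qed.

Lemma rsum_scal A c u : rsum A (fun n => c * u n) = c * rsum A u.
Proof. induction A; unfold rsum in *; simpl; [ring|]. rewrite IHA; ring. Qed.

Lemma rsum_const A c : rsum A (fun _ => c) = INR (length A) * c.
Proof.
  induction A; unfold rsum in *; [simpl; ring|].
  simpl fold_right. rewrite IHA. change (length (a :: A)) with (S (length A)). rewrite S_INR. ring.
Qed.

Lemma ravg_ext A u v : (forall n, In n A -> u n = v n) -> ravg A u = ravg A v.
Proof. intros; rewrite !ravg_rsum, (rsum_ext A u v); auto. Qed.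

Lemma ravg_le A u v : (forall n, In n A -> u n <= v n) -> ravg A u <= ravg A v.
Proof.
  intros; rewrite !ravg_rsum. unfold Rdiv. apply Rmult_le_compat_r; [|apply rsum_le; auto].
  destruct (length A) eqn:E.
  - simpl. rewrite Rinv_0; lra.
  - left; apply Rinv_0_lt_compat, lt_0_INR; lia.
Qed.

Lemma ravg_plus A u v : ravg A (fun n => u n + v n) = ravg A u + ravg A v.
Proof. rewrite !ravg_rsum, rsum_plus. unfold Rdiv; ring. Qed.

Lemma ravg_scal A c u : ravg A (fun n => c * u n) = c * ravg A u.
Proof. rewrite !ravg_rsum, rsum_scal. unfold Rdiv; ring. Qed.

Lemma ravg_const A c : A <> [] -> ravg A (fun _ => c) = c.
Proof.
  intros. rewrite ravg_rsum, rsum_const. destruct A; [congruence|]. simpl length.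
  field. apply not_0_INR; lia.
Qed.

Lemma ravg_const_le A c : 0 <= c -> ravg A (fun _ => c) <= c.
Proof.
  intros. destruct A as [|a A].
  - unfold ravg; simpl; unfold Rdiv; rewrite Rinv_0; lra.
  - rewrite ravg_const by discriminate; lra.
Qed.

Lemma ravg_nonneg A u : (forall n, In n A -> 0 <= u n) -> 0 <= ravg A u.
Proof.
  intros. apply Rle_trans with (ravg A (fun _ => 0)); [|apply ravg_le; auto].
  rewrite ravg_rsum, rsum_const. unfold Rdiv; lra.
Qed.

(* The variance [avg (u - avg u)^2] is non-negative. *)
Lemma ravg_sqr_le A u : (ravg A u) ^ 2 <= ravg A (fun n => u n ^ 2).
Proof.
  destruct (length A) eqn:E.
  { rewrite !ravg_rsum, E. simpl INR. unfold Rdiv. rewrite Rinv_0. lra. }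
  set (m := ravg A u).
  assert (Hn : INR (length A) > 0) by (apply lt_0_INR; lia).
  assert (Hvar : 0 <= ravg A (fun n => (u n - m) ^ 2)) by (apply ravg_nonneg; intros; apply pow2_ge_0).
  replace (ravg A (fun n => (u n - m) ^ 2))
    with (ravg A (fun n => u n ^ 2) + (-2 * m) * m + m ^ 2) in Hvar; [lra|].
  rewrite <- (ravg_const A (m ^ 2)) by (destruct A; simpl in E; congruence).
  unfold m at 2. rewrite <- ravg_scal, <- !ravg_plus. apply ravg_ext; intros; ring.
Qed.

Lemma cavg_fst A g : fst (cavg A g) = ravg A (fun n => fst (g n)).
Proof.
  rewrite cavg_csum. unfold Cmult, RtoC; simpl. rewrite csum_fst, csum_snd, ravg_rsum. unfold Rdiv. ring.
Qed.

Lemma cavg_snd A g : snd (cavg A g) = ravg A (fun n => snd (g n)).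
Proof.
  rewrite cavg_csum. unfold Cmult, RtoC; simpl. rewrite csum_fst, csum_snd, ravg_rsum. unfold Rdiv. ring.
Qed.

Lemma Cnorm2_cavg_le A g : Cnorm2 (cavg A g) <= ravg A (fun n => Cnorm2 (g n)).
Proof.
  unfold Cnorm2 at 1. rewrite cavg_fst, cavg_snd.
  pose proof (ravg_sqr_le A (fun n => fst (g n))). pose proof (ravg_sqr_le A (fun n => snd (g n))).
  replace (ravg A (fun n => Cnorm2 (g n)))
    with (ravg A (fun n => fst (g n) ^ 2) + ravg A (fun n => snd (g n) ^ 2)); [nra|].
  rewrite <- ravg_plus. apply ravg_ext; intros; unfold Cnorm2; ring.
Qed.

Lemma cavg_ext A g h : (forall n, In n A -> g n = h n) -> cavg A g = cavg A h.
Proof.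
  intros. apply injective_projections; rewrite ?cavg_fst, ?cavg_snd; apply ravg_ext;
    intros; rewrite H; auto.
Qed.

Lemma csum_plus A g h : csum A (fun n => g n + h n)%C = (csum A g + csum A h)%C.
Proof. unfold csum; induction A; simpl; [Cring|]. rewrite IHA. Cring. Qed.

Lemma csum_scal A c g : csum A (fun n => c * g n)%C = (c * csum A g)%C.
Proof. unfold csum; induction A; simpl; [Cring|]. rewrite IHA. Cring. Qed.

Lemma cavg_plus A g h : cavg A (fun n => g n + h n)%C = (cavg A g + cavg A h)%C.
Proof. rewrite !cavg_csum, csum_plus. Cring. Qed.

Lemma cavg_scal A c g : cavg A (fun n => c * g n)%C = (c * cavg A g)%C.
Proof. rewrite !cavg_csum, csum_scal. Cring. Qed.

Lemma cavg_minus A g h : cavg A (fun n => g n - h n)%C = (cavg A g - cavg A h)%C.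
Proof.
  rewrite (cavg_ext A _ (fun n => g n + (-1) * h n)%C) by (intros; Cring).
  rewrite cavg_plus, cavg_scal. Cring.
Qed.

Lemma cavg_const A c : A <> [] -> cavg A (fun _ => c) = c.
Proof. intros. apply injective_projections; rewrite ?cavg_fst, ?cavg_snd; apply ravg_const; auto. Qed.

Definition frequently (P : nat -> Prop) : Prop := forall N, exists n, (N <= n)%nat /\ P n.

Definition strictly_increasing (s : nat -> nat) : Prop := forall n, (s n < s (S n))%nat.

(* [Psi'] eventually runs through later and later members of [Psi]. This is weaker than being
   a subsequence but survives diagonal extraction, and it transports "eventually" statements. *)
Definition eventually_refines (Psi Psi' : nat -> list nat) : Prop :=
  exists k, forall N, (k <= N)%nat -> exists m, (N <= m)%nat /\ Psi' N = Psi m.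

Lemma eventually_frequently P Q : eventually P -> frequently Q -> frequently (fun n => P n /\ Q n).
Proof.
  intros [N1 H1] H2 N. destruct (H2 (max N N1)) as [n [Hn Hq]].
  exists n; split; [lia|]. split; auto. apply H1; lia.
Qed.

Lemma not_eventually_frequently (P : nat -> Prop) : ~ eventually P -> frequently (fun n => ~ P n).
Proof.
  intros H N. apply NNPP. intros H'. apply H. exists N. intros n Hn.
  apply NNPP. intros Hp. apply H'. exists n; auto.
Qed.

Lemma eventually_forall_le (P : nat -> nat -> Prop) j :
  (forall i, (i <= j)%nat -> eventually (P i)) -> eventually (fun N => forall i, (i <= j)%nat -> P i N).
Proof.
  induction j; intros H.
  - destruct (H 0%nat (Nat.le_refl _)) as [N HN]. exists N; intros n Hn i Hi.
    replace i with 0%nat by lia. auto.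
  - destruct (IHj (fun i Hi => H i ltac:(lia))) as [N1 H1]. destruct (H (S j) (Nat.le_refl _)) as [N2 H2].
    exists (max N1 N2); intros n Hn i Hi.
    destruct (Nat.eq_dec i (S j)); [subst; apply H2 | apply H1]; lia.
Qed.

Lemma strictly_increasing_ge s : strictly_increasing s -> forall n, (n <= s n)%nat.
Proof. intros H n; induction n; [lia|]. specialize (H n); lia. Qed.

Lemma strictly_increasing_lt s : strictly_increasing s -> forall m n, (m < n)%nat -> (s m < s n)%nat.
Proof.
  intros H m n Hmn. induction n; [lia|].
  destruct (Nat.eq_dec m n); [subst; apply H|]. specialize (H n). specialize (IHn ltac:(lia)). lia.
Qed.

Lemma strictly_increasing_le s : strictly_increasing s -> forall m n, (m <= n)%nat -> (s m <= s n)%nat.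
Proof.
  intros H m n Hmn. destruct (Nat.eq_dec m n); [subst; lia|].
  pose proof (strictly_increasing_lt s H m n); lia.
Qed.

Lemma strictly_increasing_comp s t :
  strictly_increasing s -> strictly_increasing t -> strictly_increasing (fun n => s (t n)).
Proof. intros Hs Ht n. apply strictly_increasing_lt; auto. Qed.

Lemma eventually_refines_subseq Psi s :
  strictly_increasing s -> eventually_refines Psi (fun N => Psi (s N)).
Proof. intros H; exists 0%nat; intros; exists (s N); split; auto. apply strictly_increasing_ge; auto. Qed.

Lemma eventually_refines_trans A B C :
  eventually_refines A B -> eventually_refines B C -> eventually_refines A C.
Proof.
  intros [k1 H1] [k2 H2]. exists (max k1 k2); intros N HN.
  destruct (H2 N) as [m [Hm Em]]; [lia|]. destruct (H1 m) as [m' [Hm' Em']]; [lia|].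
  exists m'; split; [lia|]. congruence.
Qed.

Lemma eventually_refines_eventually Psi Psi' (P : list nat -> Prop) :
  eventually_refines Psi Psi' -> eventually (fun N => P (Psi N)) -> eventually (fun N => P (Psi' N)).
Proof.
  intros [k H] [N HN]. exists (max k N); intros n Hn.
  destruct (H n) as [m [Hm ->]]; [lia|]. apply HN; lia.
Qed.

Lemma eventually_refines_frequently Psi Psi' (P : list nat -> Prop) :
  eventually_refines Psi Psi' -> frequently (fun N => P (Psi' N)) -> frequently (fun N => P (Psi N)).
Proof.
  intros [k H] HF N. destruct (HF (max k N)) as [n [Hn Pn]]. destruct (H n) as [m [Hm Em]]; [lia|].
  exists m; split; [lia|]. congruence.
Qed.

Lemma is_lim_seq_eventually (u : nat -> R) l :
  is_lim_seq u (Finite l) <-> forall eps, 0 < eps -> eventually (fun n => Rabs (u n - l) < eps).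
Proof.
  rewrite <- is_lim_seq_spec. split; intros H.
  - intros eps Heps. exact (H (mkposreal eps Heps)).
  - intros eps. exact (H eps (cond_pos eps)).
Qed.

Lemma eventually_refines_lim Psi Psi' (G : list nat -> R) l :
  eventually_refines Psi Psi' ->
  is_lim_seq (fun N => G (Psi N)) (Finite l) -> is_lim_seq (fun N => G (Psi' N)) (Finite l).
Proof.
  rewrite !is_lim_seq_eventually. intros HT H eps Heps.
  apply (eventually_refines_eventually Psi Psi' (fun A => Rabs (G A - l) < eps)); auto.
Qed.

Lemma is_lim_seq_0_squeeze (v w : nat -> R) :
  (forall n, 0 <= v n) -> eventually (fun n => v n <= w n) -> is_lim_seq w 0 -> is_lim_seq v 0.
Proof.
  rewrite !is_lim_seq_eventually. intros H0 [N HN] Hw eps Heps.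
  destruct (Hw eps Heps) as [M HM]. exists (max N M); intros n Hn.
  specialize (HN n ltac:(lia)); specialize (HM n ltac:(lia)); specialize (H0 n).
  rewrite Rminus_0_r in *. rewrite Rabs_pos_eq in * by lra. lra.
Qed.

Lemma is_lim_seq_0_plus (v w : nat -> R) :
  is_lim_seq v 0 -> is_lim_seq w 0 -> is_lim_seq (fun n => v n + w n) 0.
Proof.
  intros. replace (Finite 0) with (Rbar_plus 0 0) by (simpl; f_equal; ring). apply is_lim_seq_plus'; auto.
Qed.

Lemma is_lim_seq_scal (v : nat -> R) a b :
  is_lim_seq v (Finite b) -> is_lim_seq (fun n => a * v n) (Finite (a * b)).
Proof. intros H. exact (is_lim_seq_scal_l v a b H). Qed.

Lemma is_lim_seq_0_scal (v : nat -> R) c : is_lim_seq v 0 -> is_lim_seq (fun n => c * v n) 0.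
Proof.
  intros H. replace (Finite 0) with (Finite (c * 0)) by (f_equal; ring). apply is_lim_seq_scal; auto.
Qed.

Lemma is_lim_seq_0_sqrt (v : nat -> R) :
  (forall n, 0 <= v n) -> is_lim_seq v 0 -> is_lim_seq (fun n => sqrt (v n)) 0.
Proof.
  intros H0 H. rewrite is_lim_seq_eventually in *. intros eps He.
  destruct (H (eps * eps)) as [N HN]; [nra|]. exists N; intros n Hn.
  specialize (HN n Hn). specialize (H0 n).
  rewrite Rminus_0_r, Rabs_pos_eq in * by (auto; apply sqrt_pos).
  rewrite <- (sqrt_square eps) by lra. apply sqrt_lt_1_alt. lra.
Qed.

Lemma INR_unbounded x : exists M : nat, x <= INR M.
Proof.
  destruct (archimed x) as [H1 _]. destruct (Z_le_gt_dec 0 (up x)) as [Hz|Hz].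
  - exists (Z.to_nat (up x)). rewrite INR_IZR_INZ, Z2Nat.id by auto. lra.
  - exists 0%nat. apply Z.gt_lt, IZR_lt in Hz. simpl. lra.
Qed.

Lemma inv_succ_eventually_lt eps : 0 < eps -> eventually (fun k => 1 / (INR k + 1) < eps).
Proof.
  intros Heps. destruct (INR_unbounded (1 / eps)) as [K HK]. exists K. intros k Hk.
  apply le_INR in Hk. assert (0 < INR k + 1) by (pose proof (pos_INR k); lra).
  apply (Rmult_lt_reg_r (INR k + 1)); auto. unfold Rdiv. rewrite Rmult_1_l, Rinv_l by lra.
  apply (Rmult_lt_reg_l (/ eps)); [apply Rinv_0_lt_compat; lra|].
  rewrite <- Rmult_assoc, Rinv_l, Rmult_1_l by lra. unfold Rdiv in HK. lra.
Qed.

Lemma extract_subseq (P : nat -> nat -> Prop) :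
  (forall k m, exists n, (m <= n)%nat /\ P k n) -> exists s, strictly_increasing s /\ forall k, P k (s k).
Proof.
  intros H.
  assert (F : forall k m, {n | (m <= n)%nat /\ P k n})
    by (intros; apply constructive_indefinite_description; auto).
  set (s := fix s k := match k with O => proj1_sig (F O O) | S k' => proj1_sig (F k (S (s k'))) end).
  exists s. split.
  - intros n. simpl. destruct (F (S n) (S (s n))); simpl. lia.
  - intros [|k]; simpl; [exact (proj2 (proj2_sig (F O O))) | exact (proj2 (proj2_sig (F (S k) _)))].
Qed.

Lemma is_LimSup_LimSup_seq u : is_LimSup_seq u (LimSup_seq u).
Proof. destruct (ex_LimSup_seq u) as [l H]. rewrite (is_LimSup_seq_unique _ _ H). auto. Qed.

Lemma LimSup_seq_subseq (u : nat -> R) l :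
  LimSup_seq u = Finite l -> exists s, strictly_increasing s /\ is_lim_seq (fun k => u (s k)) l.
Proof.
  intros E. pose proof (is_LimSup_LimSup_seq u) as H. rewrite E in H.
  destruct (extract_subseq (fun k n => Rabs (u n - l) < 1 / (INR k + 1))) as [s [Hs Hp]].
  { intros k m.
    assert (Hp : 0 < 1 / (INR k + 1)) by (apply Rdiv_lt_0_compat; [lra | pose proof (pos_INR k); lra]).
    destruct (H (mkposreal _ Hp)) as [H1 [N H2]]. simpl in *.
    destruct (H1 (max m N)) as [n [Hn Hu]]. exists n; split; [lia|].
    specialize (H2 n ltac:(lia)). apply Rabs_def1; lra. }
  exists s; split; auto. apply is_lim_seq_eventually. intros eps Heps.
  destruct (inv_succ_eventually_lt eps Heps) as [K HK].
  exists K; intros k Hk. specialize (Hp k); specialize (HK k Hk). lra.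
Qed.

Lemma LimSup_seq_bounded (u : nat -> R) M :
  eventually (fun n => Rabs (u n) <= M) -> exists l, LimSup_seq u = Finite l.
Proof.
  intros [N HN]. pose proof (is_LimSup_LimSup_seq u) as H.
  destruct (LimSup_seq u) as [l| |].
  - exists l; auto.
  - destruct (H M N) as [n [Hn Hu]]. specialize (HN n Hn). apply Rabs_le_inv in HN. lra.
  - destruct (H (-M - 1)) as [N' HN']. specialize (HN (max N N') ltac:(lia)).
    specialize (HN' (max N N') ltac:(lia)). apply Rabs_le_inv in HN. lra.
Qed.

Lemma bounded_convergent_subseq (u : nat -> R) M :
  eventually (fun n => Rabs (u n) <= M) ->
  exists s (l : R), strictly_increasing s /\ is_lim_seq (fun k => u (s k)) l.
Proof.
  intros H. destruct (LimSup_seq_bounded u M H) as [l E].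
  destruct (LimSup_seq_subseq u l E) as [s [Hs Hl]]. exists s, l; auto.
Qed.

Definition Clim (u : nat -> C) (c : C) : Prop := is_lim_seq (fun N => Cmod (u N - c)%C) 0.

Lemma Clim_0_Cmod (u : nat -> C) : Clim u (RtoC 0) <-> is_lim_seq (fun N => Cmod (u N)) 0.
Proof. unfold Clim. split; apply is_lim_seq_ext; intros; f_equal; Cring. Qed.

Lemma Clim_of_components (u : nat -> C) (c : C) :
  is_lim_seq (fun N => fst (u N)) (fst c) -> is_lim_seq (fun N => snd (u N)) (snd c) -> Clim u c.
Proof.
  intros H1 H2. unfold Clim.
  apply (is_lim_seq_0_squeeze _ (fun N => Rabs (fst (u N) - fst c) + Rabs (snd (u N) - snd c))).
  - intros; apply Cmod_ge_0.
  - exists 0%nat; intros n _. pose proof (Cmod_le_Rabs_fst_snd (u n - c)%C) as Hc. simpl in Hc.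
    unfold Rminus. lra.
  - apply is_lim_seq_0_plus.
    + apply (is_lim_seq_abs_0 (fun N => fst (u N) - fst c)).
      replace (Finite 0) with (Rbar_minus (fst c) (fst c)) by (simpl; f_equal; ring).
      apply is_lim_seq_minus'; auto using is_lim_seq_const.
    + apply (is_lim_seq_abs_0 (fun N => snd (u N) - snd c)).
      replace (Finite 0) with (Rbar_minus (snd c) (snd c)) by (simpl; f_equal; ring).
      apply is_lim_seq_minus'; auto using is_lim_seq_const.
Qed.

Lemma Clim_fst (u : nat -> C) (c : C) : Clim u c -> is_lim_seq (fun N => fst (u N)) (fst c).
Proof.
  unfold Clim. rewrite !is_lim_seq_eventually. intros H eps He. destruct (H eps He) as [N HN].
  exists N; intros n Hn. specialize (HN n Hn). rewrite Rminus_0_r, Rabs_pos_eq in HN by apply Cmod_ge_0.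
  pose proof (Rabs_fst_le (u n - c)%C). simpl in *. unfold Rminus. lra.
Qed.

Lemma Clim_snd (u : nat -> C) (c : C) : Clim u c -> is_lim_seq (fun N => snd (u N)) (snd c).
Proof.
  unfold Clim. rewrite !is_lim_seq_eventually. intros H eps He. destruct (H eps He) as [N HN].
  exists N; intros n Hn. specialize (HN n Hn). rewrite Rminus_0_r, Rabs_pos_eq in HN by apply Cmod_ge_0.
  pose proof (Rabs_snd_le (u n - c)%C). simpl in *. unfold Rminus. lra.
Qed.

Lemma Clim_plus u v a b : Clim u a -> Clim v b -> Clim (fun N => u N + v N)%C (a + b)%C.
Proof.
  unfold Clim. intros. apply (is_lim_seq_0_squeeze _ (fun N => Cmod (u N - a) + Cmod (v N - b))).
  - intros; apply Cmod_ge_0.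
  - exists 0%nat; intros. eapply Rle_trans; [|apply Cmod_triangle]. right; f_equal; Cring.
  - apply is_lim_seq_0_plus; auto.
Qed.

Lemma Clim_scal u a c : Clim u a -> Clim (fun N => c * u N)%C (c * a)%C.
Proof.
  unfold Clim. intros. apply (is_lim_seq_0_squeeze _ (fun N => Cmod c * Cmod (u N - a))).
  - intros; apply Cmod_ge_0.
  - exists 0%nat; intros. rewrite <- Cmod_mult. right; f_equal; Cring.
  - apply is_lim_seq_0_scal; auto.
Qed.

Lemma Clim_ext u v a : (forall N, u N = v N) -> Clim u a -> Clim v a.
Proof. unfold Clim; intros H. apply is_lim_seq_ext. intros; rewrite H; auto. Qed.

Lemma Clim_minus u v a b : Clim u a -> Clim v b -> Clim (fun N => u N - v N)%C (a - b)%C.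
Proof.
  intros Hu Hv. replace (a - b)%C with (a + (-1) * b)%C by Cring.
  apply (Clim_ext (fun N => u N + (-1) * v N)%C); [intros; Cring|].
  apply Clim_plus, Clim_scal; auto.
Qed.

Lemma Clim_const c : Clim (fun _ => c) c.
Proof.
  unfold Clim. eapply is_lim_seq_ext; [|apply is_lim_seq_const]. intros; simpl.
  replace (c - c)%C with (RtoC 0) by Cring. rewrite Cmod_0. auto.
Qed.

Lemma Clim_unique u a b : Clim u a -> Clim u b -> a = b.
Proof.
  intros Ha Hb. apply injective_projections.
  - apply Clim_fst, is_lim_seq_unique in Ha. apply Clim_fst, is_lim_seq_unique in Hb. congruence.
  - apply Clim_snd, is_lim_seq_unique in Ha. apply Clim_snd, is_lim_seq_unique in Hb. congruence.
Qed.

Lemma Clim_subseq u a s : strictly_increasing s -> Clim u a -> Clim (fun N => u (s N)) a.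
Proof.
  unfold Clim; intros Hs H.
  apply (is_lim_seq_subseq (fun N => Cmod (u N - a))); auto. apply eventually_subseq; auto.
Qed.

Lemma eventually_refines_Clim Psi Psi' (G : list nat -> C) a :
  eventually_refines Psi Psi' -> Clim (fun N => G (Psi N)) a -> Clim (fun N => G (Psi' N)) a.
Proof. unfold Clim; intros. apply (eventually_refines_lim Psi Psi' (fun A => Cmod (G A - a))); auto. Qed.

Lemma bounded_Clim_subseq (u : nat -> C) M :
  eventually (fun n => Cmod (u n) <= M) -> exists s c, strictly_increasing s /\ Clim (fun k => u (s k)) c.
Proof.
  intros H.
  destruct (bounded_convergent_subseq (fun n => fst (u n)) M) as [s1 [l1 [Hs1 H1]]].
  { eapply filter_imp; [|apply H]. intros n Hn. pose proof (Rabs_fst_le (u n)); lra. }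
  destruct (bounded_convergent_subseq (fun n => snd (u (s1 n))) M) as [s2 [l2 [Hs2 H2]]].
  { destruct H as [N HN]. exists N; intros n Hn. pose proof (Rabs_snd_le (u (s1 n))).
    pose proof (strictly_increasing_ge s1 Hs1 n). specialize (HN (s1 n) ltac:(lia)). lra. }
  exists (fun k => s1 (s2 k)), (l1, l2). split; [apply strictly_increasing_comp; auto|].
  apply Clim_of_components; simpl; auto.
  apply (is_lim_seq_subseq (fun n => fst (u (s1 n)))); auto. apply eventually_subseq; auto.
Qed.

Lemma cexp2pi_add a b : cexp2pi (a + b) = (cexp2pi a * cexp2pi b)%C.
Proof.
  unfold cexp2pi. replace (2 * PI * (a + b)) with (2 * PI * a + 2 * PI * b) by ring.
  rewrite cos_plus, sin_plus. Cring.
Qed.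

Lemma Cnorm2_cexp2pi t : Cnorm2 (cexp2pi t) = 1.
Proof. unfold Cnorm2, cexp2pi; simpl. pose proof (sin2_cos2 (2 * PI * t)). unfold Rsqr in *. lra. Qed.

Lemma Cmod_cexp2pi t : Cmod (cexp2pi t) = 1.
Proof. rewrite Cmod_Cnorm2, Cnorm2_cexp2pi, sqrt_1; auto. Qed.

Lemma cexp2pi_0 : cexp2pi 0 = RtoC 1.
Proof. unfold cexp2pi. rewrite Rmult_0_r, cos_0, sin_0. auto. Qed.

Lemma cexp2pi_opp t : cexp2pi (- t) = Cconj (cexp2pi t).
Proof.
  unfold cexp2pi, Cconj; simpl. replace (2 * PI * - t) with (- (2 * PI * t)) by ring.
  rewrite cos_neg, sin_neg. auto.
Qed.

Lemma cexp2pi_add_IZR t z : cexp2pi (t + IZR z) = cexp2pi t.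
Proof.
  assert (Hper : forall x (n : nat), cos (x + 2 * INR n * PI) = cos x /\ sin (x + 2 * INR n * PI) = sin x)
    by (intros; split; [apply cos_period | apply sin_period]).
  unfold cexp2pi. replace (2 * PI * (t + IZR z)) with (2 * PI * t + 2 * IZR z * PI) by ring.
  destruct (Z_le_gt_dec 0 z).
  - rewrite <- (Z2Nat.id z), <- INR_IZR_INZ by auto.
    destruct (Hper (2 * PI * t) (Z.to_nat z)) as [-> ->]. auto.
  - replace z with (- Z.of_nat (Z.to_nat (- z)))%Z by lia. rewrite opp_IZR, <- INR_IZR_INZ.
    set (n := Z.to_nat (- z)). set (y := 2 * PI * t + 2 * - INR n * PI).
    destruct (Hper y n) as [Hc Hs].
    replace (y + 2 * INR n * PI) with (2 * PI * t) in Hc, Hs by (unfold y; ring). rewrite Hc, Hs. auto.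
Qed.

Lemma cexp2pi_frac_part t (n : nat) : cexp2pi (INR n * frac_part t) = cexp2pi (INR n * t).
Proof.
  replace (INR n * t) with (INR n * frac_part t + IZR (Int_part t * Z.of_nat n))
    by (unfold frac_part; rewrite mult_IZR, <- INR_IZR_INZ; ring).
  symmetry; apply cexp2pi_add_IZR.
Qed.

Lemma cexp2pi_neq_1 a : -1 < a < 1 -> a <> 0 -> cexp2pi a <> RtoC 1.
Proof.
  intros Ha Hn E. unfold cexp2pi, RtoC in E. injection E as E1 E2.
  apply sin_eq_0_0 in E2. destruct E2 as [k Hk]. pose proof PI_RGT_0.
  assert (IZR k = 2 * a) by (apply (Rmult_eq_reg_r PI); lra).
  assert (Hk2 : -2 < IZR k < 2) by lra. destruct Hk2 as [Hlo Hhi]. apply lt_IZR in Hlo, Hhi.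
  assert (Hk3 : (k = 0 \/ k = 1 \/ k = -1)%Z) by lia.
  destruct Hk3 as [-> | [-> | ->]]; rewrite Hk in E1.
  - simpl in *. lra.
  - rewrite Rmult_1_l, cos_PI in E1. lra.
  - replace (IZR (-1) * PI) with (- PI) in E1 by (simpl; ring). rewrite cos_neg, cos_PI in E1. lra.
Qed.

Definition Folner_shift1 (Psi : nat -> list nat) : Prop :=
  (forall N, NoDup (Psi N)) /\ (forall N, Psi N <> []) /\
  is_lim_seq (fun N => INR (symdiff_card (Psi N) 1) / INR (length (Psi N))) 0.

Lemma Folner_shift1_of_refines Phi Psi :
  Folner Phi -> (forall N, exists m, Psi N = Phi m) -> eventually_refines Phi Psi -> Folner_shift1 Psi.
Proof.
  intros [H1 [H2 H3]] Hm HT. split; [|split].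
  - intros N. destruct (Hm N) as [m ->]; auto.
  - intros N. destruct (Hm N) as [m ->]; auto.
  - apply (eventually_refines_lim Phi Psi (fun A => INR (symdiff_card A 1) / INR (length A))); auto.
Qed.

Lemma memb_In x A : memb x A = true <-> In x A.
Proof. unfold memb. destruct (in_dec Nat.eq_dec x A); split; intros; auto; congruence. Qed.

Lemma NoDup_shift_set A m : NoDup A -> NoDup (shift_set A m).
Proof. intros. apply FinFun.Injective_map_NoDup; auto. intros x y H1; lia. Qed.

Lemma csum_filter_split (p : nat -> bool) l g :
  csum l g = (csum (filter p l) g + csum (filter (fun x => negb (p x)) l) g)%C.
Proof. unfold csum; induction l; simpl; [Cring|]. destruct (p a); simpl; rewrite IHl; Cring. Qed.

Lemma csum_Permutation l l' g : Permutation l l' -> csum l g = csum l' g.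
Proof. unfold csum; induction 1; simpl; auto; [rewrite IHPermutation; auto | Cring | congruence]. Qed.

Lemma Cmod_csum_le l g : (forall n, In n l -> Cmod (g n) <= 1) -> Cmod (csum l g) <= INR (length l).
Proof.
  induction l as [|a l IH]; intros H.
  - unfold csum; simpl. rewrite Cmod_0; lra.
  - unfold csum; simpl fold_right. change (length (a :: l)) with (S (length l)). rewrite S_INR.
    eapply Rle_trans; [apply Cmod_triangle|]. pose proof (H a (or_introl eq_refl)).
    assert (Cmod (csum l g) <= INR (length l)) by (apply IH; intros; apply H; simpl; auto).
    unfold csum in *. lra.
Qed.

(* The sums over [A + 1] and [A] share the terms indexed by their intersection. *)
Lemma Cmod_csum_shift1_sub_le A g : NoDup A -> (forall n, Cmod (g n) <= 1) ->
  Cmod (csum A (fun n => g (n + 1)%nat) - csum A g)%C <= INR (symdiff_card A 1).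
Proof.
  intros HA Hg. set (B := shift_set A 1). assert (HB : NoDup B) by (apply NoDup_shift_set; auto).
  replace (csum A (fun n => g (n + 1)%nat)) with (csum B g)
    by (unfold csum, B, shift_set; rewrite map_map; auto).
  rewrite (csum_filter_split (fun x => memb x A) B), (csum_filter_split (fun x => memb x B) A).
  assert (Hp : Permutation (filter (fun x => memb x A) B) (filter (fun x => memb x B) A)).
  { apply NoDup_Permutation; try apply NoDup_filter; auto.
    intros x. rewrite !filter_In, !memb_In. tauto. }
  rewrite (csum_Permutation _ _ g Hp).
  set (inter := csum (filter (fun x => memb x B) A) g).
  set (out_A := csum (filter (fun x => negb (memb x A)) B) g).
  set (out_B := csum (filter (fun x => negb (memb x B)) A) g).
  replace (inter + out_A - (inter + out_B))%C with (out_A + - out_B)%C by Cring.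
  eapply Rle_trans; [apply Cmod_triangle|]. rewrite Cmod_opp.
  unfold symdiff_card. rewrite plus_INR. fold B.
  pose proof (Cmod_csum_le (filter (fun x => negb (memb x A)) B) g ltac:(auto)).
  pose proof (Cmod_csum_le (filter (fun x => negb (memb x B)) A) g ltac:(auto)). unfold out_A, out_B. lra.
Qed.

(* Shifting by 1 multiplies the sum of [e(a n)] by [e(a)], so [(e(a) - 1)] times it is a boundary term. *)
Lemma Cmod_cavg_character_le A a : NoDup A -> A <> [] ->
  Cmod (cexp2pi a - 1)%C * Cmod (cavg A (fun n => cexp2pi (a * INR n)))
    <= INR (symdiff_card A 1) / INR (length A).
Proof.
  intros HA Hne.
  assert (Hl : 0 < INR (length A)) by (destruct A; [congruence|]; apply lt_0_INR; simpl; lia).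
  pose proof (Cmod_csum_shift1_sub_le A (fun n => cexp2pi (a * INR n)) HA
                (fun n => Req_le _ _ (Cmod_cexp2pi _))) as H.
  cbv beta in H. set (S := csum A (fun n => cexp2pi (a * INR n))) in *.
  replace (csum A (fun n => cexp2pi (a * INR (n + 1)))) with (cexp2pi a * S)%C in H.
  2:{ unfold S. rewrite <- csum_scal. unfold csum. f_equal. apply map_ext. intros n.
      rewrite plus_INR, <- cexp2pi_add. f_equal. simpl. ring. }
  replace (cexp2pi a * S - S)%C with ((cexp2pi a - 1) * S)%C in H by Cring.
  rewrite Cmod_mult in H.
  rewrite cavg_csum, Cmod_mult, Cmod_R, Rabs_pos_eq by (left; apply Rinv_0_lt_compat; auto).
  fold S. unfold Rdiv. rewrite <- Rmult_assoc, (Rmult_comm (Cmod _) (/ _)), Rmult_assoc, Rmult_comm.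
  apply Rmult_le_compat_r; auto. left; apply Rinv_0_lt_compat; auto.
Qed.

Lemma cavg_character_lim_0 Psi a : Folner_shift1 Psi -> -1 < a < 1 -> a <> 0 ->
  is_lim_seq (fun N => Cmod (cavg (Psi N) (fun n => cexp2pi (a * INR n)))) 0.
Proof.
  intros [HN [Hne Hlim]] Ha Ha0.
  assert (Hc : 0 < Cmod (cexp2pi a - 1)%C).
  { destruct (Cmod_ge_0 (cexp2pi a - 1)%C) as [|H]; auto. symmetry in H. apply Cmod_eq_0 in H.
    exfalso; apply (cexp2pi_neq_1 a Ha Ha0).
    replace (cexp2pi a) with ((cexp2pi a - 1) + 1)%C by Cring. rewrite H. Cring. }
  apply (is_lim_seq_0_squeeze _
    (fun N => / Cmod (cexp2pi a - 1)%C * (INR (symdiff_card (Psi N) 1) / INR (length (Psi N))))).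
  - intros; apply Cmod_ge_0.
  - exists 0%nat; intros n _. pose proof (Cmod_cavg_character_le (Psi n) a (HN n) (Hne n)).
    apply (Rmult_le_reg_l (Cmod (cexp2pi a - 1)%C)); auto. rewrite <- Rmult_assoc, Rinv_r by lra. lra.
  - apply is_lim_seq_0_scal, Hlim.
Qed.

Lemma In_le_list_max A x : In x A -> (x <= list_max A)%nat.
Proof. intros H. exact (proj1 (Forall_forall _ A) (proj1 (list_max_le A _) (Nat.le_refl _)) x H). Qed.

Lemma list_max_In A : A <> [] -> In (list_max A) A.
Proof.
  induction A as [|a A IH]; intros H; [congruence|]. destruct A as [|b A]; [simpl; left; lia|].
  simpl list_max in *. destruct (Nat.max_spec a (Nat.max b (list_max A))) as [[_ ->] | [_ ->]];
    [right; apply IH; discriminate | left; auto].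
Qed.

Lemma symdiff_card_shift1_pos A : A <> [] -> (1 <= symdiff_card A 1)%nat.
Proof.
  intros HA. unfold symdiff_card.
  assert (Hin : In (list_max A + 1)%nat (filter (fun x => negb (memb x A)) (shift_set A 1))).
  { apply filter_In. split.
    - apply (in_map (fun x => (x + 1)%nat)), list_max_In; auto.
    - destruct (memb (list_max A + 1) A) eqn:E; auto.
      apply memb_In, In_le_list_max in E. lia. }
  destruct (filter _ (shift_set A 1)); simpl in *; [tauto | lia].
Qed.

Lemma Folner_shift1_length Psi :
  Folner_shift1 Psi -> forall M : nat, eventually (fun N => (M <= length (Psi N))%nat).
Proof.
  intros [HN [Hne Hlim]] M. rewrite is_lim_seq_eventually in Hlim.
  destruct (Hlim (/ (INR M + 1))) as [N HN']; [apply Rinv_0_lt_compat; pose proof (pos_INR M); lra|].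
  exists N; intros n Hn. specialize (HN' n Hn).
  assert (Hl : 0 < INR (length (Psi n)))
    by (destruct (Psi n) eqn:E; [exfalso; apply (Hne n); auto | apply lt_0_INR; simpl; lia]).
  pose proof (le_INR _ _ (symdiff_card_shift1_pos (Psi n) (Hne n))) as H1. simpl in H1.
  rewrite Rminus_0_r, Rabs_pos_eq in HN'
    by (apply Rmult_le_pos; [apply pos_INR | left; apply Rinv_0_lt_compat; lra]).
  destruct (le_lt_dec M (length (Psi n))) as [|Hlt]; auto. exfalso. apply lt_INR in Hlt.
  assert (/ INR (length (Psi n)) <= INR (symdiff_card (Psi n) 1) / INR (length (Psi n))).
  { unfold Rdiv. rewrite <- (Rmult_1_l (/ INR (length (Psi n)))) at 1.
    apply Rmult_le_compat_r; auto. left; apply Rinv_0_lt_compat; lra. }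
  assert (/ (INR M + 1) <= / INR (length (Psi n))) by (apply Rinv_le_contravar; lra). lra.
Qed.

Definition msq (A : list nat) (g : nat -> C) : R := ravg A (fun n => Cnorm2 (g n)).

Lemma msq_nonneg A g : 0 <= msq A g.
Proof. apply ravg_nonneg; intros; apply Cnorm2_ge_0. Qed.

Lemma msq_ext A g h : (forall n, g n = h n) -> msq A g = msq A h.
Proof. intros H; unfold msq; apply ravg_ext; intros; rewrite H; auto. Qed.

Lemma msq_le A g h : (forall n, Cnorm2 (g n) <= Cnorm2 (h n)) -> msq A g <= msq A h.
Proof. intros; apply ravg_le; auto. Qed.

Lemma msq_triangle A g h k :
  msq A (fun n => g n - h n)%C <= 2 * msq A (fun n => g n - k n)%C + 2 * msq A (fun n => k n - h n)%C.
Proof.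
  unfold msq. rewrite <- !ravg_scal, <- ravg_plus. apply ravg_le. intros.
  replace (g n - h n)%C with ((g n - k n) + (k n - h n))%C by Cring. apply Cnorm2_plus_le.
Qed.

Lemma msq_plus_le A g h : msq A (fun n => g n + h n)%C <= 2 * msq A g + 2 * msq A h.
Proof. unfold msq. rewrite <- !ravg_scal, <- ravg_plus. apply ravg_le. intros; apply Cnorm2_plus_le. Qed.

Lemma Phinorm_msq Psi g : Phinorm Psi g =
  match LimSup_seq (fun N => msq (Psi N) g) with
  | Finite r => Finite (sqrt r) | p_infty => p_infty | m_infty => m_infty end.
Proof.
  unfold Phinorm.
  replace (fun N => ravg (Psi N) (fun n => Cmod (g n) ^ 2)) with (fun N => msq (Psi N) g); auto.
  apply functional_extensionality; intros N. apply ravg_ext; intros; rewrite Cmod_sqr; auto.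
Qed.

Lemma Phinorm_lt_eventually Psi g e : 0 < e -> Rbar_lt (Phinorm Psi g) (Finite e) ->
  exists r, r < e * e /\ eventually (fun N => msq (Psi N) g <= r).
Proof.
  intros He H. rewrite Phinorm_msq in H. pose proof (is_LimSup_LimSup_seq (fun N => msq (Psi N) g)) as HL.
  destruct (LimSup_seq (fun N => msq (Psi N) g)) as [l| |]; simpl in H.
  - assert (Hl : l < e * e).
    { destruct (Rle_lt_dec l 0); [nra|]. apply sqrt_lt_0_alt. rewrite sqrt_square; lra. }
    assert (Hp : 0 < (e * e - l) / 2) by lra.
    destruct (HL (mkposreal _ Hp)) as [_ [N HN]]. exists (l + (e * e - l) / 2). split; [lra|].
    exists N; intros n Hn; specialize (HN n Hn); simpl in HN; lra.
  - tauto.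
  - destruct (HL 0) as [N HN]. exists 0; split; [nra|]. exists N; intros; left; auto.
Qed.

Lemma eventually_Phinorm_lt Psi g e r : 0 < e -> r < e * e ->
  eventually (fun N => msq (Psi N) g <= r) -> Rbar_lt (Phinorm Psi g) (Finite e).
Proof.
  intros He Hr HN. rewrite Phinorm_msq.
  assert (Hle : Rbar_le (LimSup_seq (fun N => msq (Psi N) g)) (LimSup_seq (fun _ => r)))
    by (apply LimSup_le; auto).
  rewrite LimSup_seq_const in Hle. destruct (LimSup_seq (fun N => msq (Psi N) g)) as [l| |]; simpl in *; auto.
  apply Rle_lt_trans with (sqrt r); [apply sqrt_le_1_alt; auto|].
  destruct (Rle_lt_dec r 0); [rewrite sqrt_neg_0; auto|].
  rewrite <- (sqrt_square e) by lra. apply sqrt_lt_1_alt. lra.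
Qed.

Lemma L2_iff_eventually_bounded Psi g : L2 Psi g <-> exists M, eventually (fun N => msq (Psi N) g <= M).
Proof.
  unfold L2. rewrite Phinorm_msq. split.
  - intros H. pose proof (is_LimSup_LimSup_seq (fun N => msq (Psi N) g)) as HL.
    destruct (LimSup_seq (fun N => msq (Psi N) g)) as [l| |]; simpl in H.
    + destruct (HL (mkposreal 1 Rlt_0_1)) as [_ [N HN]]. exists (l + 1), N; intros; left; apply HN; auto.
    + tauto.
    + destruct (HL 0) as [N HN]. exists 0, N; intros; left; auto.
  - intros [M HM].
    assert (Hle : Rbar_le (LimSup_seq (fun N => msq (Psi N) g)) (LimSup_seq (fun _ => M)))
      by (apply LimSup_le; auto).
    rewrite LimSup_seq_const in Hle. destruct (LimSup_seq (fun N => msq (Psi N) g)); simpl in *; auto.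
Qed.

Lemma L2_bound Psi g : L2 Psi g -> exists M, 0 <= M /\ eventually (fun N => msq (Psi N) g <= M).
Proof.
  rewrite L2_iff_eventually_bounded. intros [M HM]. exists (Rmax M 0). split; [apply Rmax_r|].
  eapply filter_imp; [|apply HM]. intros; pose proof (Rmax_l M 0). lra.
Qed.

Lemma L2_refines Psi Psi' g : eventually_refines Psi Psi' -> L2 Psi g -> L2 Psi' g.
Proof.
  rewrite !L2_iff_eventually_bounded. intros HT [M HM]. exists M.
  apply (eventually_refines_eventually Psi Psi' (fun A => msq A g <= M)); auto.
Qed.

Lemma Phinorm_of_lim Psi g l :
  is_lim_seq (fun N => msq (Psi N) g) (Finite l) -> Phinorm Psi g = Finite (sqrt l).
Proof.
  intros H. rewrite Phinorm_msq. apply is_lim_LimSup_seq, is_LimSup_seq_unique in H. rewrite H. auto.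
Qed.

Lemma Phinorm_ge_of_lim Psi g r (w : nat -> R) l : Phinorm Psi g = Finite r -> is_lim_seq w (Finite l) ->
  eventually (fun N => w N <= msq (Psi N) g) -> sqrt l <= r.
Proof.
  intros E Hw HN. rewrite Phinorm_msq in E.
  assert (Hle : Rbar_le (LimSup_seq w) (LimSup_seq (fun N => msq (Psi N) g))) by (apply LimSup_le; auto).
  apply is_lim_LimSup_seq, is_LimSup_seq_unique in Hw. rewrite Hw in Hle.
  destruct (LimSup_seq (fun N => msq (Psi N) g)); try discriminate. injection E as <-. simpl in Hle.
  apply sqrt_le_1_alt; auto.
Qed.

(* Unlike in [trig_poly], the frequencies are arbitrary reals. *)
Definition trig_sum (L : list (C * R)) (n : nat) : C :=
  fold_right Cplus (RtoC 0) (map (fun p => Cmult (fst p) (cexp2pi (snd p * INR n))) L).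

Lemma trig_sum_nil n : trig_sum [] n = RtoC 0.
Proof. reflexivity. Qed.

Lemma trig_sum_cons p L n : trig_sum (p :: L) n = (fst p * cexp2pi (snd p * INR n) + trig_sum L n)%C.
Proof. reflexivity. Qed.

Lemma trig_poly_trig_sum L : trig_poly (trig_sum L).
Proof.
  exists (map (fun p => (fst p, frac_part (snd p))) L). split.
  - intros p Hp. apply in_map_iff in Hp. destruct Hp as [q [<- _]]. simpl. pose proof (base_fp (snd q)). lra.
  - intros n. induction L as [|a L IH]; auto. rewrite trig_sum_cons, IH. simpl.
    rewrite (Rmult_comm (frac_part _)), cexp2pi_frac_part, Rmult_comm. auto.
Qed.

Lemma trig_poly_trig_sum_inv a : trig_poly a -> exists L, forall n, a n = trig_sum L n.
Proof. intros [cs [_ H]]. exists cs. auto. Qed.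

Lemma trig_sum_app L1 L2 n : trig_sum (L1 ++ L2) n = (trig_sum L1 n + trig_sum L2 n)%C.
Proof. induction L1; simpl; [rewrite trig_sum_nil; Cring|]. rewrite !trig_sum_cons, IHL1. Cring. Qed.

Definition trig_scal (c : C) (L : list (C * R)) : list (C * R) := map (fun p => (c * fst p, snd p)%C) L.

Lemma trig_sum_scal c L n : trig_sum (trig_scal c L) n = (c * trig_sum L n)%C.
Proof.
  induction L; simpl; [rewrite trig_sum_nil; Cring|].
  unfold trig_scal in *; simpl. rewrite !trig_sum_cons, IHL. simpl. Cring.
Qed.

Definition trig_mul (L1 L2 : list (C * R)) : list (C * R) :=
  flat_map (fun p => map (fun q => (Cmult (fst p) (fst q), Rplus (snd p) (snd q))) L2) L1.

Lemma trig_sum_mul L1 L2 n : trig_sum (trig_mul L1 L2) n = (trig_sum L1 n * trig_sum L2 n)%C.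
Proof.
  induction L1 as [|a L1 IH]; simpl; [rewrite trig_sum_nil; Cring|]. unfold trig_mul in *. simpl.
  rewrite trig_sum_app, IH, trig_sum_cons.
  replace (trig_sum (map (fun q => ((fst a * fst q)%C, snd a + snd q)) L2) n)
    with (fst a * cexp2pi (snd a * INR n) * trig_sum L2 n)%C; [Cring|].
  clear IH. induction L2; simpl; [rewrite trig_sum_nil; Cring|]. rewrite !trig_sum_cons, <- IHL2. simpl.
  rewrite Rmult_plus_distr_r, cexp2pi_add. Cring.
Qed.

Definition trig_conj (L : list (C * R)) : list (C * R) := map (fun p => (Cconj (fst p), - snd p)) L.

Lemma trig_sum_conj L n : trig_sum (trig_conj L) n = Cconj (trig_sum L n).
Proof.
  induction L; simpl; [rewrite trig_sum_nil; Cring|].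
  unfold trig_conj in *; simpl. rewrite !trig_sum_cons, IHL. simpl.
  rewrite Ropp_mult_distr_l_reverse, cexp2pi_opp. Cring.
Qed.

Lemma trig_sum_const c n : trig_sum [(c, 0)] n = c.
Proof. rewrite trig_sum_cons, trig_sum_nil. simpl. rewrite Rmult_0_l, cexp2pi_0. Cring. Qed.

Definition coef_norm1 (L : list (C * R)) : R := fold_right (fun p acc => Cmod (fst p) + acc) 0 L.

Lemma Cmod_trig_sum_le L n : Cmod (trig_sum L n) <= coef_norm1 L.
Proof.
  induction L; simpl; [rewrite trig_sum_nil, Cmod_0; lra|]. rewrite trig_sum_cons.
  eapply Rle_trans; [apply Cmod_triangle|]. rewrite Cmod_mult, Cmod_cexp2pi. lra.
Qed.

Lemma coef_norm1_nonneg L : 0 <= coef_norm1 L.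
Proof. induction L; simpl; [lra|]. pose proof (Cmod_ge_0 (fst a)); lra. Qed.

Definition real_trig (u : nat -> R) : Prop := exists L, forall n, RtoC (u n) = trig_sum L n.

Lemma real_trig_const c : real_trig (fun _ => c).
Proof. exists [(RtoC c, 0)]. intros; rewrite trig_sum_const; auto. Qed.

Lemma real_trig_plus u v : real_trig u -> real_trig v -> real_trig (fun n => u n + v n).
Proof. intros [L1 H1] [L2 H2]. exists (L1 ++ L2). intros; rewrite trig_sum_app, <- H1, <- H2. Cring. Qed.

Lemma real_trig_mult u v : real_trig u -> real_trig v -> real_trig (fun n => u n * v n).
Proof.
  intros [L1 H1] [L2 H2]. exists (trig_mul L1 L2). intros; rewrite trig_sum_mul, <- H1, <- H2. Cring.
Qed.

Lemma real_trig_scal c u : real_trig u -> real_trig (fun n => c * u n).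
Proof. intros [L1 H1]. exists (trig_scal (RtoC c) L1). intros; rewrite trig_sum_scal, <- H1. Cring. Qed.

Lemma real_trig_re L : real_trig (fun n => fst (trig_sum L n)).
Proof.
  exists (trig_scal (RtoC (/2)) (L ++ trig_conj L)). intros n.
  rewrite trig_sum_scal, trig_sum_app, trig_sum_conj.
  apply injective_projections; unfold Cconj, Cplus, Cmult, RtoC; simpl; field.
Qed.

Definition Bes_msq (Psi : nat -> list nat) (g : nat -> C) : Prop :=
  forall eps, 0 < eps -> exists L, eventually (fun N => msq (Psi N) (fun n => g n - trig_sum L n)%C <= eps).

Lemma Bes_iff_Bes_msq Psi g : Bes Psi g <-> Bes_msq Psi g.
Proof.
  split.
  - intros H eps He. destruct (H (sqrt eps)) as [a [Ha Hn]]; [apply sqrt_lt_R0; auto|].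
    destruct (trig_poly_trig_sum_inv a Ha) as [L HL]. exists L.
    destruct (Phinorm_lt_eventually _ _ _ (sqrt_lt_R0 _ He) Hn) as [r [Hr Hev]].
    rewrite sqrt_sqrt in Hr by lra.
    eapply filter_imp; [|apply Hev]. intros N HN.
    rewrite (msq_ext _ _ (fun n => g n - a n)%C) by (intros; rewrite HL; auto). lra.
  - intros H eps He. destruct (H (eps * eps / 2)) as [L HL]; [nra|].
    exists (trig_sum L). split; [apply trig_poly_trig_sum|].
    apply (eventually_Phinorm_lt _ _ _ (eps * eps / 2)); auto. nra.
Qed.

Lemma Bes_msq_refines Psi Psi' g : eventually_refines Psi Psi' -> Bes_msq Psi g -> Bes_msq Psi' g.
Proof.
  intros HT H eps He. destruct (H eps He) as [L HL]. exists L.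
  apply (eventually_refines_eventually Psi Psi' (fun A => msq A (fun n => g n - trig_sum L n)%C <= eps));
    auto.
Qed.

Lemma Bes_msq_minus Psi g h : Bes_msq Psi g -> Bes_msq Psi h -> Bes_msq Psi (fun n => g n - h n)%C.
Proof.
  intros Hg Hh eps He.
  destruct (Hg (eps / 4)) as [L1 H1]; [lra|]. destruct (Hh (eps / 4)) as [L2 H2]; [lra|].
  exists (L1 ++ trig_scal (RtoC (-1)) L2). eapply filter_imp; [|apply (filter_and _ _ H1 H2)].
  intros N [HN1 HN2].
  apply Rle_trans with (2 * msq (Psi N) (fun n => g n - trig_sum L1 n)%C
                        + 2 * msq (Psi N) (fun n => h n - trig_sum L2 n)%C); [|lra].
  unfold msq. rewrite <- !ravg_scal, <- ravg_plus. apply ravg_le. intros n _.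
  rewrite trig_sum_app, trig_sum_scal. eapply Rle_trans; [|apply Cnorm2_minus_le]. right. f_equal. Cring.
Qed.

Definition inner_avg (A : list nat) (x y : nat -> C) : R :=
  ravg A (fun n => fst (x n) * fst (y n) + snd (x n) * snd (y n)).

Lemma inner_avg_ext A x y x' y' :
  (forall n, x n = x' n) -> (forall n, y n = y' n) -> inner_avg A x y = inner_avg A x' y'.
Proof. intros Hx Hy; unfold inner_avg; apply ravg_ext; intros; rewrite Hx, Hy; auto. Qed.

Lemma inner_avg_plus_r A x y z : inner_avg A x (fun n => y n + z n)%C = inner_avg A x y + inner_avg A x z.
Proof. unfold inner_avg. rewrite <- ravg_plus. apply ravg_ext; intros; simpl; ring. Qed.

Lemma Rabs_ravg_le A u b : (forall n, In n A -> Rabs (u n) <= b n) -> Rabs (ravg A u) <= ravg A b.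
Proof.
  intros H. apply Rabs_le. split.
  - replace (- ravg A b) with (ravg A (fun n => -1 * b n)) by (rewrite ravg_scal; ring).
    apply ravg_le. intros n Hn. specialize (H n Hn). apply Rabs_le_inv in H. lra.
  - apply ravg_le. intros n Hn. specialize (H n Hn). apply Rabs_le_inv in H. lra.
Qed.

(* [2 |x.y| <= lam |x|^2 + |y|^2 / lam], from expanding [|lam x +- y|^2 / lam >= 0]. *)
Lemma inner_avg_amgm A x y lam : 0 < lam ->
  Rabs (inner_avg A x y) <= (lam * msq A x + msq A y / lam) / 2.
Proof.
  intros Hl.
  replace ((lam * msq A x + msq A y / lam) / 2)
    with (ravg A (fun n => (lam * Cnorm2 (x n) + / lam * Cnorm2 (y n)) * / 2)).
  2:{ unfold msq. rewrite (ravg_ext _ _ (fun n => (/ 2 * lam) * Cnorm2 (x n) + (/ 2 * / lam) * Cnorm2 (y n)))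
        by (intros; ring).
      rewrite ravg_plus, !ravg_scal. field. lra. }
  apply Rabs_ravg_le. intros n _.
  set (a := fst (x n)); set (b := snd (x n)); set (c := fst (y n)); set (d := snd (y n)).
  assert (Hsq : forall s, s = 1 \/ s = -1 ->
    (lam * Cnorm2 (x n) + / lam * Cnorm2 (y n)) * / 2 + s * (a * c + b * d)
      = ((lam * a + s * c) ^ 2 + (lam * b + s * d) ^ 2) * / (2 * lam)).
  { intros s [-> | ->]; unfold Cnorm2; fold a b c d; field; lra. }
  assert (Hpos : forall s, 0 <= ((lam * a + s * c) ^ 2 + (lam * b + s * d) ^ 2) * / (2 * lam)).
  { intros s. apply Rmult_le_pos; [apply Rplus_le_le_0_compat; apply pow2_ge_0|].
    left; apply Rinv_0_lt_compat; lra. }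
  pose proof (Hsq 1 (or_introl eq_refl)); pose proof (Hsq (-1) (or_intror eq_refl)).
  pose proof (Hpos 1); pose proof (Hpos (-1)).
  apply Rabs_le. lra.
Qed.

Lemma msq_plus_expand A x y : msq A (fun n => x n + y n)%C = msq A x + 2 * inner_avg A x y + msq A y.
Proof.
  unfold msq, inner_avg. rewrite <- ravg_scal, <- !ravg_plus. apply ravg_ext; intros.
  unfold Cnorm2, Cplus; simpl; ring.
Qed.

Lemma msq_minus_expand A x y : msq A (fun n => x n - y n)%C = msq A x - 2 * inner_avg A x y + msq A y.
Proof.
  unfold msq, inner_avg. replace (ravg A (fun n => Cnorm2 (x n)) - 2 * _) with
    (ravg A (fun n => Cnorm2 (x n))
     + (-2) * ravg A (fun n => fst (x n) * fst (y n) + snd (x n) * snd (y n))) by ring.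
  rewrite <- ravg_scal, <- !ravg_plus. apply ravg_ext; intros.
  unfold Cnorm2, Cminus, Cplus, Copp; simpl; ring.
Qed.

Definition fourier_coef (A : list nat) (g : nat -> C) (th : R) : C :=
  cavg A (fun n => g n * cexp2pi (INR n * th))%C.

Lemma Cmod_fourier_coef_le A g th : Cmod (fourier_coef A g th) <= sqrt (msq A g).
Proof.
  rewrite Cmod_Cnorm2. apply sqrt_le_1_alt. unfold fourier_coef.
  eapply Rle_trans; [apply Cnorm2_cavg_le|]. apply ravg_le. intros. rewrite Cnorm2_mult, Cnorm2_cexp2pi. lra.
Qed.

Lemma fourier_coef_ext A g h th : (forall n, g n = h n) -> fourier_coef A g th = fourier_coef A h th.
Proof. intros H. apply cavg_ext. intros; rewrite H; auto. Qed.

Lemma fourier_coef_plus A g h th :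
  fourier_coef A (fun n => g n + h n)%C th = (fourier_coef A g th + fourier_coef A h th)%C.
Proof. unfold fourier_coef. rewrite <- cavg_plus. apply cavg_ext; intros; Cring. Qed.

Lemma fourier_coef_minus A g h th :
  fourier_coef A (fun n => g n - h n)%C th = (fourier_coef A g th - fourier_coef A h th)%C.
Proof. unfold fourier_coef. rewrite <- cavg_minus. apply cavg_ext; intros; Cring. Qed.

Lemma Cmod_fourier_coef_add_ge A g h th eps : 0 < eps -> msq A h <= eps * eps / 4 ->
  eps <= Cmod (fourier_coef A g th) -> eps / 2 <= Cmod (fourier_coef A (fun n => g n + h n)%C th).
Proof.
  intros He Hh Hg. rewrite fourier_coef_plus.
  assert (Cmod (fourier_coef A h th) <= eps / 2).
  { eapply Rle_trans; [apply Cmod_fourier_coef_le|]. rewrite <- (sqrt_square (eps / 2)) by lra.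
    apply sqrt_le_1_alt. lra. }
  pose proof (Cmod_triangle (fourier_coef A g th + fourier_coef A h th) (- fourier_coef A h th)) as Ht.
  rewrite Cmod_opp in Ht. replace (fourier_coef A g th + fourier_coef A h th + - fourier_coef A h th)%C
    with (fourier_coef A g th) in Ht by Cring. lra.
Qed.

Lemma fourier_coef_frac_part A g th : fourier_coef A g (frac_part th) = fourier_coef A g th.
Proof. apply cavg_ext. intros n _. rewrite cexp2pi_frac_part. auto. Qed.

Lemma fourier_coef_character A c phi th :
  fourier_coef A (fun n => c * cexp2pi (phi * INR n))%C th
  = (c * cavg A (fun n => cexp2pi ((phi + th) * INR n)))%C.
Proof.
  unfold fourier_coef. rewrite <- cavg_scal. apply cavg_ext; intros.
  rewrite Rmult_plus_distr_r, cexp2pi_add, (Rmult_comm th). Cring.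
Qed.

Lemma inner_avg_character A x c phi : inner_avg A x (fun n => c * cexp2pi (phi * INR n))%C =
  fst c * fst (fourier_coef A x (- phi)) + snd c * snd (fourier_coef A x (- phi)).
Proof.
  unfold inner_avg, fourier_coef. rewrite cavg_fst, cavg_snd, <- !ravg_scal, <- ravg_plus.
  apply ravg_ext. intros.
  replace (INR n * - phi) with (- (phi * INR n)) by ring. rewrite cexp2pi_opp. simpl. ring.
Qed.

Lemma inner_avg_trig_sum_lim_0 Psi x L :
  (forall p, In p L -> Clim (fun N => fourier_coef (Psi N) x (- snd p)) (RtoC 0)) ->
  is_lim_seq (fun N => inner_avg (Psi N) x (trig_sum L)) 0.
Proof.
  induction L as [|a L IH]; intros H.
  - eapply is_lim_seq_ext; [|apply is_lim_seq_const]. intros N. unfold inner_avg.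
    rewrite (ravg_ext _ _ (fun n => 0 * 1)), ravg_scal; [ring|]. intros; rewrite trig_sum_nil; simpl; ring.
  - eapply is_lim_seq_ext.
    { intros N. symmetry.
      rewrite (inner_avg_ext _ x _ x (fun n => fst a * cexp2pi (snd a * INR n) + trig_sum L n)%C) by auto.
      rewrite inner_avg_plus_r, inner_avg_character. reflexivity. }
    apply is_lim_seq_0_plus; [|apply IH; intros; apply H; simpl; auto].
    specialize (H a (or_introl eq_refl)).
    apply is_lim_seq_0_plus; apply is_lim_seq_0_scal; [apply Clim_fst in H | apply Clim_snd in H]; auto.
Qed.

Definition fourier_null (Psi : nat -> list nat) (g : nat -> C) : Prop :=
  forall th : R, Clim (fun N => fourier_coef (Psi N) g th) (RtoC 0).

Lemma fourier_null_refines Psi Psi' g :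
  eventually_refines Psi Psi' -> fourier_null Psi g -> fourier_null Psi' g.
Proof. intros HT H th. apply (eventually_refines_Clim Psi Psi' (fun A => fourier_coef A g th)); auto. Qed.

Lemma Bes_perp_of_fourier_null Psi g : L2 Psi g -> fourier_null Psi g -> Bes_perp Psi g.
Proof.
  intros H1 H2. split; auto. intros th _. exact (proj1 (Clim_0_Cmod _) (H2 th)).
Qed.

Lemma L2_fourier_null_add_negligible Psi g u :
  L2 Psi g -> fourier_null Psi g -> is_lim_seq (fun N => msq (Psi N) u) 0 ->
  L2 Psi (fun n => g n + u n)%C /\ fourier_null Psi (fun n => g n + u n)%C.
Proof.
  intros HL HP Hu. split.
  - apply L2_iff_eventually_bounded. apply L2_iff_eventually_bounded in HL. destruct HL as [M HM].
    exists (2 * M + 2 * 1). rewrite is_lim_seq_eventually in Hu.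
    eapply filter_imp; [|apply (filter_and _ _ HM (Hu 1 Rlt_0_1))].
    intros n [H1 H2]. rewrite Rminus_0_r in H2. apply Rlt_le, Rabs_le_inv in H2.
    pose proof (msq_plus_le (Psi n) g u). lra.
  - intros th. eapply Clim_ext; [intros N; symmetry; apply fourier_coef_plus|].
    replace (RtoC 0) with (RtoC 0 + RtoC 0)%C by Cring. apply Clim_plus; auto.
    apply Clim_0_Cmod. apply (is_lim_seq_0_squeeze _ (fun N => sqrt (msq (Psi N) u))).
    + intros; apply Cmod_ge_0.
    + exists 0%nat; intros; apply Cmod_fourier_coef_le.
    + apply is_lim_seq_0_sqrt; auto. intros; apply msq_nonneg.
Qed.

(* Approximate [D] by a trigonometric sum [T]: the inner product with [T] vanishes in the limit by
   Fourier-nullity, and the rest is controlled by AM-GM. *)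
Lemma inner_avg_Bes_lim_0 Psi g D : L2 Psi g -> fourier_null Psi g -> Bes_msq Psi D ->
  is_lim_seq (fun N => inner_avg (Psi N) g D) 0.
Proof.
  intros HL HP HD. destruct (L2_bound _ _ HL) as [M [HM0 HM]]. apply is_lim_seq_eventually. intros eps He.
  set (lam := eps / (2 * (M + 1))). assert (Hl : 0 < lam) by (unfold lam; apply Rdiv_lt_0_compat; lra).
  destruct (HD (lam * eps / 2)) as [L HDL]; [nra|].
  pose proof (inner_avg_trig_sum_lim_0 Psi g L (fun p _ => HP (- snd p))) as HC.
  rewrite is_lim_seq_eventually in HC.
  eapply filter_imp; [|apply (filter_and _ _ (filter_and _ _ HM HDL) (HC (eps / 2) ltac:(lra)))].
  intros N [[H1 H2] H3]. rewrite Rminus_0_r in *.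
  rewrite (inner_avg_ext _ g D g (fun n => (D n - trig_sum L n) + trig_sum L n)%C) by (intros; Cring || auto).
  rewrite inner_avg_plus_r.
  pose proof (inner_avg_amgm (Psi N) g (fun n => D n - trig_sum L n)%C lam Hl) as Hamgm.
  assert (lam * msq (Psi N) g <= eps / 2).
  { unfold lam. replace (eps / (2 * (M + 1)) * msq (Psi N) g) with (eps / 2 * (msq (Psi N) g / (M + 1)))
      by (field; lra).
    rewrite <- (Rmult_1_r (eps / 2)) at 2. apply Rmult_le_compat_l; [lra|].
    apply (Rmult_le_reg_r (M + 1)); [lra|]. unfold Rdiv. rewrite Rmult_assoc, Rinv_l by lra. lra. }
  assert (msq (Psi N) (fun n => D n - trig_sum L n)%C / lam <= eps / 2).
  { apply (Rmult_le_reg_r lam); auto. unfold Rdiv. rewrite Rmult_assoc, Rinv_l by lra. lra. }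
  eapply Rle_lt_trans; [apply Rabs_triang|]. lra.
Qed.

(* Pythagoras: [g - B] is orthogonal to every Besicovitch function, in particular to [B - g']. *)
Lemma Phinorm_best_approx Psi g B l : Bes_msq Psi B -> L2 Psi (fun n => g n - B n)%C ->
  fourier_null Psi (fun n => g n - B n)%C ->
  is_lim_seq (fun N => msq (Psi N) (fun n => g n - B n)%C) (Finite l) ->
  Phinorm Psi (fun n => g n - B n)%C =
    Glb_Rbar (fun r => exists g', Bes Psi g' /\ Phinorm Psi (fun n => Cminus (g n) (g' n)) = Finite r).
Proof.
  intros HB HL HP Hlim. rewrite (Phinorm_of_lim _ _ _ Hlim). symmetry. apply is_glb_Rbar_unique. split.
  - intros r [g' [Hg' E]]. simpl.
    set (e := fun n => (g n - B n)%C).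
    apply (Phinorm_ge_of_lim Psi _ r
             (fun N => msq (Psi N) e + 2 * inner_avg (Psi N) e (fun n => B n - g' n)%C) l E).
    + replace (Finite l) with (Finite (l + 2 * 0)) by (f_equal; ring).
      apply is_lim_seq_plus'; auto. apply is_lim_seq_scal.
      apply inner_avg_Bes_lim_0; auto. apply Bes_msq_minus; auto. apply Bes_iff_Bes_msq; auto.
    + exists 0%nat; intros N _.
      rewrite (msq_ext _ (fun n => g n - g' n)%C (fun n => e n + (B n - g' n))%C)
        by (intros; unfold e; Cring).
      rewrite msq_plus_expand. pose proof (msq_nonneg (Psi N) (fun n => B n - g' n)%C). lra.
  - intros b Hb. apply Hb. exists B. split; [apply Bes_iff_Bes_msq; auto | apply (Phinorm_of_lim _ _ _ Hlim)].
Qed.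

(* Written with absolute values so that approximating it reduces to approximating [Rabs]. *)
Definition clamp (a b x : R) : R := (a + b + Rabs (x - a) - Rabs (x - b)) / 2.

Lemma clamp_range a b x : a <= b -> a <= clamp a b x <= b.
Proof. intros. unfold clamp, Rabs; destruct Rcase_abs; destruct Rcase_abs; lra. Qed.

Lemma clamp_lipschitz a b x y : Rabs (clamp a b x - clamp a b y) <= Rabs (x - y).
Proof.
  unfold clamp. pose proof (Rabs_triang_inv2 (x - a) (y - a)). pose proof (Rabs_triang_inv2 (x - b) (y - b)).
  replace (x - a - (y - a)) with (x - y) in * by ring. replace (x - b - (y - b)) with (x - y) in * by ring.
  apply Rabs_le_inv in H, H0. apply Rabs_le. lra.
Qed.

Lemma clamp_obtuse a b x y : a <= b -> a <= y <= b -> (y - clamp a b x) * (x - clamp a b x) <= 0.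
Proof. intros. unfold clamp, Rabs; destruct Rcase_abs; destruct Rcase_abs; nra. Qed.

Definition Cclamp a b (z : C) : C := RtoC (clamp a b (fst z)).

Lemma Cnorm2_Cclamp_sub_le a b z w : Cnorm2 (Cclamp a b z - Cclamp a b w)%C <= Cnorm2 (z - w)%C.
Proof.
  unfold Cclamp, Cnorm2, Cminus, Cplus, Copp, RtoC; simpl.
  pose proof (Rsqr_le_abs_1 _ _ (clamp_lipschitz a b (fst z) (fst w))). unfold Rsqr in *.
  pose proof (pow2_ge_0 (snd z + - snd w)). nra.
Qed.

Lemma pow_le_one x n : 0 <= x <= 1 -> x ^ n <= 1.
Proof. intros. rewrite <- (pow1 n). apply pow_incr; lra. Qed.

(* Polynomials in [t] increasing to [sqrt t], uniformly on [[0, 1]]. *)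
Fixpoint sqrt_approx (k : nat) (t : R) : R :=
  match k with O => 0 | S k => sqrt_approx k t + (t - sqrt_approx k t * sqrt_approx k t) / 2 end.

Lemma sqrt_approx_error k t : 0 <= t <= 1 ->
  0 <= sqrt t - sqrt_approx k t <= sqrt t * (1 - sqrt t / 2) ^ k.
Proof.
  intros Ht. set (s := sqrt t).
  assert (Hs : 0 <= s <= 1)
    by (unfold s; split; [apply sqrt_pos | rewrite <- sqrt_1; apply sqrt_le_1_alt; lra]).
  assert (Hts : t = s * s) by (unfold s; rewrite sqrt_sqrt; lra). clearbody s.
  induction k as [|k [H1 H2]]; simpl; [lra|].
  set (p := sqrt_approx k t) in *.
  assert (Hp : 0 <= (1 - s / 2) ^ k <= 1) by (split; [apply pow_le; lra | apply pow_le_one; lra]).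
  assert (E : s - (p + (t - p * p) / 2) = (s - p) * (1 - (s + p) / 2)) by (rewrite Hts; field).
  rewrite E. split; [apply Rmult_le_pos; nra|].
  apply Rle_trans with ((s - p) * (1 - s / 2)); [apply Rmult_le_compat_l; nra|].
  replace (s * ((1 - s / 2) * (1 - s / 2) ^ k)) with ((s * (1 - s / 2) ^ k) * (1 - s / 2)) by ring.
  apply Rmult_le_compat_r; lra.
Qed.

Lemma sqrt_approx_uniform d : 0 < d -> exists k, forall t, 0 <= t <= 1 -> sqrt t - sqrt_approx k t <= d.
Proof.
  intros Hd. set (d' := Rmin d 1).
  assert (Hd' : 0 < d' <= 1 /\ d' <= d)
    by (unfold d'; repeat split; [apply Rmin_glb_lt; lra | apply Rmin_r | apply Rmin_l]).
  destruct (pow_lt_1_zero (1 - d' / 2) ltac:(apply Rabs_def1; lra) d' ltac:(lra)) as [k Hk].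
  exists k. intros t Ht. destruct (sqrt_approx_error k t Ht) as [_ H].
  assert (Hs : 0 <= sqrt t <= 1) by (split; [apply sqrt_pos | rewrite <- sqrt_1; apply sqrt_le_1_alt; lra]).
  pose proof (pow_le (1 - sqrt t / 2) k ltac:(lra)).
  destruct (Rle_lt_dec (sqrt t) d').
  - assert ((1 - sqrt t / 2) ^ k <= 1) by (apply pow_le_one; lra). nra.
  - specialize (Hk k (Nat.le_refl _)). rewrite Rabs_pos_eq in Hk by (apply pow_le; lra).
    assert ((1 - sqrt t / 2) ^ k <= (1 - d' / 2) ^ k) by (apply pow_incr; lra). nra.
Qed.

Lemma real_trig_sqrt_approx k w : real_trig w -> real_trig (fun n => sqrt_approx k (w n)).
Proof.
  intros Hw. induction k as [|k IH]; simpl; [apply real_trig_const|].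
  replace (fun n => sqrt_approx k (w n) + (w n - sqrt_approx k (w n) * sqrt_approx k (w n)) / 2) with
    (fun n => sqrt_approx k (w n) + / 2 * (w n + -1 * (sqrt_approx k (w n) * sqrt_approx k (w n))))
    by (apply functional_extensionality; intros; field).
  apply real_trig_plus; auto. apply real_trig_scal, real_trig_plus; auto.
  apply real_trig_scal, real_trig_mult; auto.
Qed.

(* [|x| = R sqrt (x^2 / R^2)] *)
Lemma real_trig_abs_approx x R d : real_trig x -> 0 < R -> (forall n, Rabs (x n) <= R) -> 0 < d ->
  exists q, real_trig q /\ forall n, Rabs (Rabs (x n) - q n) <= d.
Proof.
  intros Hx HR Hb Hd. destruct (sqrt_approx_uniform (d / R)) as [k Hk]; [apply Rdiv_lt_0_compat; lra|].
  exists (fun n => R * sqrt_approx k (x n * x n / (R * R))). split.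
  - apply real_trig_scal, real_trig_sqrt_approx.
    replace (fun n => x n * x n / (R * R)) with (fun n => / (R * R) * (x n * x n))
      by (apply functional_extensionality; intros; field; lra).
    apply real_trig_scal, real_trig_mult; auto.
  - intros n. set (t := x n * x n / (R * R)).
    assert (Hxx : x n * x n <= R * R).
    { pose proof (Rsqr_le_abs_1 (x n) R). rewrite (Rabs_pos_eq R) in H by lra. unfold Rsqr in H. auto. }
    assert (Ht : 0 <= t <= 1).
    { unfold t. split; [apply Rmult_le_pos; [nra | left; apply Rinv_0_lt_compat; nra]|].
      apply (Rmult_le_reg_r (R * R)); [nra|]. unfold Rdiv. rewrite Rmult_assoc, Rinv_l by nra. lra. }
    assert (E : sqrt t = Rabs (x n) / R).
    { rewrite <- (sqrt_Rsqr (Rabs (x n) / R))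
        by (apply Rmult_le_pos; [apply Rabs_pos | left; apply Rinv_0_lt_compat; lra]).
      f_equal. unfold t, Rsqr. rewrite <- (Rabs_pos_eq (x n * x n)) at 1 by nra.
      rewrite Rabs_mult. field. lra. }
    specialize (Hk t Ht). destruct (sqrt_approx_error k t Ht) as [H0 _]. rewrite E in Hk, H0.
    replace (Rabs (x n) - R * sqrt_approx k t) with (R * (Rabs (x n) / R - sqrt_approx k t)) by (field; lra).
    rewrite Rabs_pos_eq by (apply Rmult_le_pos; lra).
    apply Rle_trans with (R * (d / R)); [apply Rmult_le_compat_l; lra | right; field; lra].
Qed.

Lemma Cclamp_trig_approx a b L d : 0 < d ->
  exists L', forall n, Cnorm2 (Cclamp a b (trig_sum L n) - trig_sum L' n)%C <= d.
Proof.
  intros Hd. set (x := fun n => fst (trig_sum L n)). set (R := coef_norm1 L + Rabs a + Rabs b + 1).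
  assert (Hx : forall n, Rabs (x n) <= coef_norm1 L)
    by (intros; unfold x; eapply Rle_trans; [apply Rabs_fst_le | apply Cmod_trig_sum_le]).
  set (e := Rmin d 1).
  assert (He : 0 < e <= 1 /\ e <= d)
    by (unfold e; repeat split; [apply Rmin_glb_lt; lra | apply Rmin_r | apply Rmin_l]).
  pose proof (coef_norm1_nonneg L). pose proof (Rabs_pos a). pose proof (Rabs_pos b).
  assert (Hshift : forall c, Rabs c <= Rabs a + Rabs b -> forall n, Rabs (x n - c) <= R).
  { intros c Hc n. eapply Rle_trans; [apply Rabs_triang|]. rewrite Rabs_Ropp.
    specialize (Hx n). unfold R; lra. }
  assert (Hxc : forall c, real_trig (fun n => x n - c))
    by (intros; apply real_trig_plus; [apply real_trig_re | apply real_trig_const]).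
  destruct (real_trig_abs_approx (fun n => x n - a) R e) as [q1 [Hq1 Hq1b]];
    [auto | unfold R; lra | apply Hshift; lra | lra |].
  destruct (real_trig_abs_approx (fun n => x n - b) R e) as [q2 [Hq2 Hq2b]];
    [auto | unfold R; lra | apply Hshift; lra | lra |].
  destruct (real_trig_scal (/2) _ (real_trig_plus _ _ (real_trig_plus _ _ (real_trig_const (a + b)) Hq1)
              (real_trig_scal (-1) _ Hq2))) as [L' HL'].
  exists L'. intros n. rewrite <- HL'.
  unfold Cclamp, clamp, Cnorm2, Cminus, Cplus, Copp, RtoC; simpl. fold (x n).
  specialize (Hq1b n); specialize (Hq2b n). apply Rabs_le_inv in Hq1b, Hq2b.
  set (D := (a + b + Rabs (x n - a) - Rabs (x n - b)) / 2 + - (/ 2 * (a + b + q1 n + -1 * q2 n))).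
  assert (Rabs D <= e) by (unfold D; apply Rabs_le; lra). apply Rabs_le_inv in H2.
  replace ((0 + - 0) * (0 + - 0)) with 0 by ring. nra.
Qed.

Lemma Bes_msq_Cclamp Psi a b h : Bes_msq Psi h -> Bes_msq Psi (fun n => Cclamp a b (h n)).
Proof.
  intros Hh eps He. destruct (Hh (eps / 4)) as [L HL]; [lra|].
  destruct (Cclamp_trig_approx a b L (eps / 4)) as [L' HL']; [lra|].
  exists L'. eapply filter_imp; [|apply HL]. intros N HN.
  eapply Rle_trans; [apply (msq_triangle _ _ _ (fun n => Cclamp a b (trig_sum L n)))|].
  assert (msq (Psi N) (fun n => Cclamp a b (h n) - Cclamp a b (trig_sum L n))%C <= eps / 4).
  { eapply Rle_trans; [|apply HN]. apply msq_le. intros; apply Cnorm2_Cclamp_sub_le. }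
  assert (msq (Psi N) (fun n => Cclamp a b (trig_sum L n) - trig_sum L' n)%C <= eps / 4).
  { eapply Rle_trans; [apply ravg_le; intros; apply HL'|]. apply ravg_const_le. lra. }
  lra.
Qed.

(* Clamping [h] towards a function [f] with values in [[a, b]] is an obtuse-angle projection, so
   [|h - clamp h|^2 <= - (f - h).(h - clamp h)], and the right-hand side vanishes by orthogonality. *)
Lemma Cclamp_correction_lim_0 Psi f h a b : a <= b -> (forall n, snd (f n) = 0 /\ a <= fst (f n) <= b) ->
  Bes_msq Psi h -> L2 Psi (fun n => f n - h n)%C -> fourier_null Psi (fun n => f n - h n)%C ->
  is_lim_seq (fun N => msq (Psi N) (fun n => h n - Cclamp a b (h n))%C) 0.
Proof.
  intros Hab Hf Hh HL HP.
  pose proof (inner_avg_Bes_lim_0 Psi _ (fun n => h n - Cclamp a b (h n))%C HL HP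
                (Bes_msq_minus _ _ _ Hh (Bes_msq_Cclamp _ a b _ Hh))) as HO.
  apply (is_lim_seq_0_squeeze _
    (fun N => -1 * inner_avg (Psi N) (fun n => f n - h n)%C (fun n => h n - Cclamp a b (h n))%C)).
  - intros; apply msq_nonneg.
  - exists 0%nat; intros N _. unfold msq, inner_avg. rewrite <- ravg_scal. apply ravg_le. intros n _.
    destruct (Hf n) as [H1 H2]. unfold Cclamp, Cnorm2, Cminus, Cplus, Copp, RtoC; simpl.
    pose proof (clamp_obtuse a b (fst (h n)) (fst (f n)) Hab H2). rewrite H1. nra.
  - apply is_lim_seq_0_scal; auto.
Qed.

Lemma frequently_large_Clim_subseq (u : nat -> C) M r :
  eventually (fun n => Cmod (u n) <= M) -> frequently (fun n => r <= Cmod (u n)) ->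
  exists s c, strictly_increasing s /\ Clim (fun k => u (s k)) c /\ r <= Cmod c.
Proof.
  intros HB Hf.
  destruct (extract_subseq (fun _ n => r <= Cmod (u n))) as [s1 [Hs1 Hp1]]; [intros k m; apply Hf|].
  destruct (bounded_Clim_subseq (fun k => u (s1 k)) M) as [s2 [c [Hs2 Hc]]].
  { destruct HB as [N HN]. exists N; intros n Hn. apply HN.
    pose proof (strictly_increasing_ge s1 Hs1 n); lia. }
  exists (fun k => s1 (s2 k)), c. split; [apply strictly_increasing_comp; auto|]. split; auto.
  destruct (Rle_lt_dec r (Cmod c)) as [|Hlt]; auto. exfalso.
  unfold Clim in Hc. rewrite is_lim_seq_eventually in Hc.
  destruct (Hc (r - Cmod c)) as [N HN]; [lra|]. specialize (HN N (Nat.le_refl _)).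
  rewrite Rminus_0_r, Rabs_pos_eq in HN by apply Cmod_ge_0.
  specialize (Hp1 (s2 N)). pose proof (Cmod_triangle (u (s1 (s2 N)) - c) c) as Ht.
  replace (u (s1 (s2 N)) - c + c)%C with (u (s1 (s2 N))) in Ht by Cring. lra.
Qed.

Lemma Clim_0_of_not_frequently (u : nat -> C) :
  (forall r, 0 < r -> ~ frequently (fun N => r <= Cmod (u N))) -> Clim u (RtoC 0).
Proof.
  intros H. apply Clim_0_Cmod, is_lim_seq_eventually. intros eps He.
  apply NNPP. intros Hn. apply (H eps He). intros N.
  destruct (not_eventually_frequently _ Hn N) as [n [Hn' Hp]]. exists n; split; auto.
  rewrite Rminus_0_r, Rabs_pos_eq in Hp by apply Cmod_ge_0. lra.
Qed.

Lemma fourier_coef_eventually_bounded (Psi : nat -> list nat) g l :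
  is_lim_seq (fun N => msq (Psi N) g) (Finite l) ->
  eventually (fun N => forall th, Cmod (fourier_coef (Psi N) g th) <= l + 2).
Proof.
  intros Hl. rewrite is_lim_seq_eventually in Hl. destruct (Hl 1 Rlt_0_1) as [N HN].
  exists N; intros n Hn th. specialize (HN n Hn). apply Rlt_le, Rabs_le_inv in HN.
  eapply Rle_trans; [apply Cmod_fourier_coef_le|].
  assert (Hs : 0 <= msq (Psi n) g) by apply msq_nonneg.
  destruct (Rle_lt_dec (msq (Psi n) g) 1).
  - assert (sqrt (msq (Psi n) g) <= 1) by (rewrite <- sqrt_1; apply sqrt_le_1_alt; lra). lra.
  - assert (sqrt (msq (Psi n) g) <= msq (Psi n) g); [|lra].
    rewrite <- (sqrt_square (msq (Psi n) g)) at 2 by lra. apply sqrt_le_1_alt. nra.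
Qed.

(* Near-maximal rather than maximal, since a frequency with the largest coefficient need not exist. *)
Definition greedy_choice (Psi : nat -> list nat) (g : nat -> C) (s : nat -> nat) (c : C) (th : R) : Prop :=
  strictly_increasing s /\ 0 <= th < 1 /\ Clim (fun N => fourier_coef (Psi (s N)) g th) c /\
  (forall th' r, 0 <= th' < 1 -> 0 < r ->
     frequently (fun N => r <= Cmod (fourier_coef (Psi N) g th')) -> r <= 2 * Cmod c).

Lemma greedy_choice_exists Psi g l :
  is_lim_seq (fun N => msq (Psi N) g) (Finite l) -> exists s c th, greedy_choice Psi g s c th.
Proof.
  intros Hl. set (G := fun N th => fourier_coef (Psi N) g th).
  pose proof (fourier_coef_eventually_bounded Psi g l Hl) as HB.
  set (E := fun r => exists th, 0 <= th < 1 /\ frequently (fun N => r <= Cmod (G N th))).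
  destruct (classic (exists r, 0 < r /\ E r)) as [[r0 [Hr0 HE0]] | Hnone].
  - assert (Ebound : forall r, E r -> r <= l + 2).
    { intros r [th [_ Hf]]. destruct (eventually_frequently _ _ HB Hf 0%nat) as [n [_ [H1 H2]]].
      specialize (H1 th). unfold G in H2. lra. }
    destruct (completeness E) as [sup [Hub Hlub]]; [exists (l + 2); intros r Hr; auto | exists r0; auto|].
    assert (Hs0 : r0 <= sup) by (apply Hub; auto).
    assert (Hr1 : exists r1, E r1 /\ sup / 2 < r1).
    { apply NNPP; intros H. assert (sup <= sup / 2); [|lra]. apply Hlub. intros r Hr.
      destruct (Rle_lt_dec r (sup / 2)); auto. exfalso; apply H; exists r; auto. }
    destruct Hr1 as [r1 [[th1 [Hth1 Hf1]] Hr1]].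
    assert (HB1 : eventually (fun N => Cmod (G N th1) <= l + 2))
      by (eapply filter_imp; [|apply HB]; intros N H; apply H).
    destruct (frequently_large_Clim_subseq (fun N => G N th1) (l + 2) r1 HB1 Hf1) as [s [c [Hs [Hc Hcr]]]].
    exists s, c, th1. split; [auto | split; [auto | split; [exact Hc|]]].
    intros th' r Hth' Hr Hf. assert (r <= sup) by (apply Hub; exists th'; auto). lra.
  - exists (fun N => N), (RtoC 0), 0. split; [intros n; lia|]. split; [lra|]. split.
    + apply Clim_0_of_not_frequently. intros r Hr Hf. apply Hnone.
      exists r; split; auto. exists 0; split; [lra | auto].
    + intros th' r Hth' Hr Hf. exfalso. apply Hnone. exists r; split; auto. exists th'; auto.
Qed.


Lemma msq_character A c th : A <> [] -> msq A (fun n => c * cexp2pi (th * INR n))%C = Cnorm2 c.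
Proof.
  intros HA. unfold msq. rewrite (ravg_ext _ _ (fun _ => Cnorm2 c)); [apply ravg_const; auto|].
  intros; rewrite Cnorm2_mult, Cnorm2_cexp2pi; ring.
Qed.

Lemma msq_sub_character_lim Psi g c th l : (forall N, Psi N <> []) ->
  is_lim_seq (fun N => msq (Psi N) g) (Finite l) -> Clim (fun N => fourier_coef (Psi N) g th) c ->
  is_lim_seq (fun N => msq (Psi N) (fun n => g n - c * cexp2pi (- th * INR n))%C) (Finite (l - Cnorm2 c)).
Proof.
  intros Hne Hl Hc. eapply is_lim_seq_ext.
  { intros N. symmetry. rewrite msq_minus_expand, inner_avg_character, Ropp_involutive, msq_character by auto.
    reflexivity. }
  replace (l - Cnorm2 c) with (l - 2 * (fst c * fst c + snd c * snd c) + Cnorm2 c) by (unfold Cnorm2; ring).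
  apply is_lim_seq_plus'; [|apply is_lim_seq_const]. apply is_lim_seq_minus'; auto.
  apply is_lim_seq_scal, is_lim_seq_plus'; apply is_lim_seq_scal; [apply Clim_fst | apply Clim_snd]; auto.
Qed.

Lemma fourier_coef_sub_character A g c th th' :
  fourier_coef A (fun n => g n - c * cexp2pi (- th * INR n))%C th'
  = (fourier_coef A g th' - c * cavg A (fun n => cexp2pi ((th' - th) * INR n)))%C.
Proof.
  rewrite fourier_coef_minus, fourier_coef_character.
  rewrite (cavg_ext _ _ (fun n => cexp2pi ((th' - th) * INR n))); auto.
  intros n _. do 2 f_equal. ring.
Qed.

Lemma fourier_coef_sub_character_same Psi g c th : (forall N, Psi N <> []) ->
  Clim (fun N => fourier_coef (Psi N) g th) c ->
  Clim (fun N => fourier_coef (Psi N) (fun n => g n - c * cexp2pi (- th * INR n))%C th) (RtoC 0).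
Proof.
  intros Hne Hc. eapply Clim_ext; [intros N; symmetry; apply fourier_coef_sub_character|].
  replace (RtoC 0) with (c - c * RtoC 1)%C by Cring. apply Clim_minus, Clim_scal; auto.
  eapply Clim_ext; [|apply Clim_const]. intros N. rewrite Rminus_diag.
  rewrite (cavg_ext _ _ (fun _ => RtoC 1)) by (intros; rewrite Rmult_0_l, cexp2pi_0; auto).
  rewrite cavg_const; auto.
Qed.

(* Subtracting the character at [th] leaves another vanishing coefficient vanishing: either
   [th' = th], and then [c = 0], or the Folner property kills the average of [e((th' - th) n)]. *)
Lemma fourier_coef_sub_character_other Psi g c th th' : Folner_shift1 Psi ->
  0 <= th < 1 -> 0 <= th' < 1 ->
  Clim (fun N => fourier_coef (Psi N) g th) c -> Clim (fun N => fourier_coef (Psi N) g th') (RtoC 0) ->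
  Clim (fun N => fourier_coef (Psi N) (fun n => g n - c * cexp2pi (- th * INR n))%C th') (RtoC 0).
Proof.
  intros HF Hth Hth' Hc Hc'. eapply Clim_ext; [intros N; symmetry; apply fourier_coef_sub_character|].
  destruct (Req_dec th' th) as [-> | Hneq].
  - replace c with (RtoC 0) in * by (apply (Clim_unique _ _ _ Hc' Hc)).
    eapply Clim_ext; [|apply Hc']. intros; Cring.
  - replace (RtoC 0) with (RtoC 0 - c * RtoC 0)%C by Cring. apply Clim_minus, Clim_scal; auto.
    apply Clim_0_Cmod, cavg_character_lim_0; auto; lra.
Qed.

Section Greedy_extraction.

Variable Phi : nat -> list nat.
Variable f : nat -> C.
Hypothesis HF : Folner Phi.
Variable sub0 : nat -> nat.
Variable energy0 : R.
Hypothesis Hsub0 : strictly_increasing sub0.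
Hypothesis Henergy0 : is_lim_seq (fun N => msq (Phi (sub0 N)) f) (Finite energy0).

Definition residual (L : list (C * R)) (n : nat) : C := (f n - trig_sum L n)%C.

Definition admissible (pi : nat -> nat) (L : list (C * R)) : Prop :=
  strictly_increasing pi /\ exists l, is_lim_seq (fun N => msq (Phi (pi N)) (residual L)) (Finite l).

(* On inputs that are not [admissible], the step is a junk value. *)
Lemma greedy_step_exists pi L : exists t : (nat -> nat) * C * R,
  admissible pi L -> greedy_choice (fun N => Phi (pi N)) (residual L) (fst (fst t)) (snd (fst t)) (snd t).
Proof.
  destruct (classic (admissible pi L)) as [[_ [l Hl]] | H].
  - destruct (greedy_choice_exists _ _ _ Hl) as [s [c [th Hs]]]. exists (s, c, th). auto.
  - exists ((fun n => n), RtoC 0, 0). intros; contradiction.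
Qed.

Definition greedy_step pi L := proj1_sig (constructive_indefinite_description _ (greedy_step_exists pi L)).

Lemma greedy_step_spec pi L : admissible pi L ->
  greedy_choice (fun N => Phi (pi N)) (residual L)
    (fst (fst (greedy_step pi L))) (snd (fst (greedy_step pi L))) (snd (greedy_step pi L)).
Proof. unfold greedy_step. destruct (constructive_indefinite_description _ _). simpl. auto. Qed.

Fixpoint stage (k : nat) : (nat -> nat) * list (C * R) :=
  match k with
  | O => (sub0, [])
  | S k =>
      let st := stage k in let t := greedy_step (fst st) (snd st) in
      (fun N => fst st (fst (fst t) N), (snd (fst t), - snd t) :: snd st)
  end.

Definition stage_subseq k := fst (stage k).
Definition stage_terms k := snd (stage k).
Definition step_subseq k := fst (fst (greedy_step (stage_subseq k) (stage_terms k))).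
Definition step_coef k := snd (fst (greedy_step (stage_subseq k) (stage_terms k))).
Definition step_freq k := snd (greedy_step (stage_subseq k) (stage_terms k)).

Fixpoint energy k := match k with O => energy0 | S k => energy k - Cnorm2 (step_coef k) end.

Definition stage_invariant k : Prop :=
  strictly_increasing (stage_subseq k) /\
  is_lim_seq (fun N => msq (Phi (stage_subseq k N)) (residual (stage_terms k))) (Finite (energy k)) /\
  (forall j, (j < k)%nat ->
     Clim (fun N => fourier_coef (Phi (stage_subseq k N)) (residual (stage_terms k)) (step_freq j))
       (RtoC 0)) /\
  (forall j, (j < k)%nat -> 0 <= step_freq j < 1).

Lemma stage_invariant_greedy k : stage_invariant k ->
  greedy_choice (fun N => Phi (stage_subseq k N)) (residual (stage_terms k))
    (step_subseq k) (step_coef k) (step_freq k).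
Proof. intros [H1 [H2 _]]. apply greedy_step_spec. split; auto. exists (energy k); auto. Qed.

Lemma Phi_nonempty m : Phi m <> [].
Proof. destruct HF as [_ [H _]]; auto. Qed.

Lemma residual_succ k n :
  residual (stage_terms (S k)) n
  = (residual (stage_terms k) n - step_coef k * cexp2pi (- step_freq k * INR n))%C.
Proof.
  unfold residual. change (stage_terms (S k)) with ((step_coef k, - step_freq k) :: stage_terms k).
  rewrite trig_sum_cons. simpl. Cring.
Qed.

Lemma stage_invariant_succ k : stage_invariant k -> stage_invariant (S k).
Proof.
  intros HI. pose proof (stage_invariant_greedy k HI) as [Hs [Hth [Hc _]]].
  destruct HI as [H1 [H2 [H3 H4]]].
  unfold stage_invariant. change (stage_subseq (S k)) with (fun N => stage_subseq k (step_subseq k N)).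
  assert (Hsub : forall u l, is_lim_seq (fun N => u (stage_subseq k N)) l ->
            is_lim_seq (fun N => u (stage_subseq k (step_subseq k N))) l)
    by (intros u l Hu; apply (is_lim_seq_subseq (fun N => u (stage_subseq k N))); auto;
        apply eventually_subseq; auto).
  split; [|split; [|split]].
  - apply strictly_increasing_comp; auto.
  - eapply is_lim_seq_ext; [intros N; symmetry; apply msq_ext, residual_succ|].
    apply msq_sub_character_lim; auto; [intros; apply Phi_nonempty|].
    apply (Hsub (fun m => msq (Phi m) _)); auto.
  - intros j Hj. eapply Clim_ext; [intros N; symmetry; apply fourier_coef_ext, residual_succ|].
    destruct (Nat.eq_dec j k) as [-> | Hjk].
    + apply fourier_coef_sub_character_same; auto. intros; apply Phi_nonempty.
    + assert (HF1 : Folner_shift1 (fun N => Phi (stage_subseq k (step_subseq k N)))).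
      { apply (Folner_shift1_of_refines Phi); auto; [intros N; eexists; reflexivity|].
        apply (eventually_refines_subseq Phi (fun N => stage_subseq k (step_subseq k N))).
        apply strictly_increasing_comp; auto. }
      apply (fourier_coef_sub_character_other _ _ _ _ _ HF1 Hth (H4 j ltac:(lia)) Hc).
      exact (Clim_subseq (fun N => fourier_coef (Phi (stage_subseq k N)) _ _) _ _ Hs (H3 j ltac:(lia))).
  - intros j Hj. destruct (Nat.eq_dec j k) as [-> | Hjk]; auto. apply H4; lia.
Qed.

Lemma stage_invariant_all k : stage_invariant k.
Proof.
  induction k; [|apply stage_invariant_succ; auto].
  split; [auto | split; [|split; intros; lia]].
  eapply is_lim_seq_ext; [|apply Henergy0]. intros N. apply msq_ext. intros n. unfold residual. simpl. Cring.
Qed.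


Lemma stage_subseq_incr k : strictly_increasing (stage_subseq k).
Proof. apply (stage_invariant_all k). Qed.

Lemma step_subseq_incr k : strictly_increasing (step_subseq k).
Proof. apply (stage_invariant_greedy k (stage_invariant_all k)). Qed.

Lemma stage_subseq_shift k j n : exists m, (n <= m)%nat /\ stage_subseq (k + j) n = stage_subseq k m.
Proof.
  revert n. induction j as [|j IH]; intros n.
  - exists n. rewrite Nat.add_0_r. auto.
  - rewrite Nat.add_succ_r. destruct (IH (step_subseq (k + j) n)) as [m [Hm E]].
    exists m. split; [pose proof (strictly_increasing_ge _ (step_subseq_incr (k + j)) n); lia | exact E].
Qed.

Definition diag (N : nat) : nat := stage_subseq N N.
Definition diag_seq (N : nat) : list nat := Phi (diag N).

Lemma diag_refines k : eventually_refines (fun N => Phi (stage_subseq k N)) diag_seq.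
Proof.
  exists k. intros N HN. destruct (stage_subseq_shift k (N - k) N) as [m [Hm E]]. exists m; split; auto.
  unfold diag_seq, diag. replace (k + (N - k))%nat with N in E by lia. rewrite E. auto.
Qed.

Lemma diag_incr : strictly_increasing diag.
Proof.
  intros N. unfold diag. change (stage_subseq (S N) (S N)) with (stage_subseq N (step_subseq N (S N))).
  apply strictly_increasing_lt; [apply stage_subseq_incr|].
  pose proof (strictly_increasing_ge _ (step_subseq_incr N) (S N)). lia.
Qed.

Lemma Folner_shift1_diag : Folner_shift1 diag_seq.
Proof.
  apply (Folner_shift1_of_refines Phi); auto; [intros N; exists (diag N); auto|].
  apply (eventually_refines_trans _ (fun N => Phi (stage_subseq 0 N))).
  - apply eventually_refines_subseq, stage_subseq_incr.
  - apply diag_refines.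
Qed.

Lemma diag_energy_lim k :
  is_lim_seq (fun N => msq (diag_seq N) (residual (stage_terms k))) (Finite (energy k)).
Proof.
  apply (eventually_refines_lim (fun N => Phi (stage_subseq k N)) diag_seq (fun A => msq A _)).
  - apply diag_refines.
  - apply stage_invariant_all.
Qed.

Lemma diag_coef_lim_0 j k : (j < k)%nat ->
  Clim (fun N => fourier_coef (diag_seq N) (residual (stage_terms k)) (step_freq j)) (RtoC 0).
Proof.
  intros Hjk.
  apply (eventually_refines_Clim (fun N => Phi (stage_subseq k N)) diag_seq (fun A => fourier_coef A _ _)).
  - apply diag_refines.
  - apply stage_invariant_all; auto.
Qed.

Lemma diag_greedy_bound k th r : 0 <= th < 1 -> 0 < r ->
  frequently (fun N => r <= Cmod (fourier_coef (diag_seq N) (residual (stage_terms k)) th)) ->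
  r <= 2 * Cmod (step_coef k).
Proof.
  intros Hth Hr Hf. destruct (stage_invariant_greedy k (stage_invariant_all k)) as [_ [_ [_ Hmax]]].
  apply (Hmax th r Hth Hr).
  apply (eventually_refines_frequently (fun N => Phi (stage_subseq k N)) diag_seq
           (fun A => r <= Cmod (fourier_coef A _ th))); auto using diag_refines.
Qed.

Lemma stage_terms_extend i j : (i <= j)%nat -> exists T, stage_terms j = T ++ stage_terms i /\
  forall p, In p T -> exists m, (m < j)%nat /\ p = (step_coef m, - step_freq m).
Proof.
  intros Hij. induction j as [|j IH].
  - replace i with 0%nat by lia. exists []. split; auto. intros p [].
  - destruct (Nat.eq_dec i (S j)) as [-> | Hne]; [exists []; split; auto; intros p []|].
    destruct IH as [T [E HT]]; [lia|]. exists ((step_coef j, - step_freq j) :: T). split.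
    + change (stage_terms (S j)) with ((step_coef j, - step_freq j) :: stage_terms j). rewrite E. auto.
    + intros p [<- | Hp]; [exists j; split; auto|]. destruct (HT p Hp) as [m [Hm ->]]. exists m; split; auto.
Qed.

(* The terms added between stages [i] and [j] are orthogonal to the stage-[j] residual. *)
Lemma msq_stage_diff_lim i j : (i <= j)%nat ->
  is_lim_seq (fun N => msq (diag_seq N) (fun n => trig_sum (stage_terms j) n - trig_sum (stage_terms i) n)%C)
    (Finite (energy i - energy j)).
Proof.
  intros Hij. destruct (stage_terms_extend i j Hij) as [T [E HT]].
  assert (Htp : forall n, (trig_sum (stage_terms j) n - trig_sum (stage_terms i) n)%C = trig_sum T n)
    by (intros; rewrite E, trig_sum_app; Cring).
  assert (Hc : is_lim_seq (fun N => inner_avg (diag_seq N) (residual (stage_terms j)) (trig_sum T)) 0).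
  { apply inner_avg_trig_sum_lim_0. intros p Hp. destruct (HT p Hp) as [m [Hm ->]]. simpl.
    rewrite Ropp_involutive. apply diag_coef_lim_0; auto. }
  eapply is_lim_seq_ext.
  { intros N. symmetry. rewrite (msq_ext _ _ _ Htp).
    set (rj := residual (stage_terms j)).
    assert (msq (diag_seq N) (residual (stage_terms i))
            = msq (diag_seq N) rj + 2 * inner_avg (diag_seq N) rj (trig_sum T) + msq (diag_seq N) (trig_sum T)).
    { rewrite <- msq_plus_expand. apply msq_ext. intros n. unfold rj, residual. rewrite <- Htp. Cring. }
    replace (msq (diag_seq N) (trig_sum T)) with (msq (diag_seq N) (residual (stage_terms i))
      - msq (diag_seq N) rj - 2 * inner_avg (diag_seq N) rj (trig_sum T)) by lra.
    reflexivity. }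
  replace (energy i - energy j) with (energy i - energy j - 2 * 0) by ring.
  apply is_lim_seq_minus'; [apply is_lim_seq_minus'; apply diag_energy_lim | apply is_lim_seq_scal; auto].
Qed.

Lemma energy_nonneg k : 0 <= energy k.
Proof.
  pose proof (is_lim_seq_le (fun _ => 0) _ 0 (energy k) (fun N => msq_nonneg (diag_seq N) _)
                (is_lim_seq_const 0) (diag_energy_lim k)) as H.
  simpl in H; auto.
Qed.

Lemma energy_inf : exists m, (forall k, m <= energy k) /\ forall eps, 0 < eps -> exists k, energy k < m + eps.
Proof.
  destruct (completeness (fun x => exists k, x = - energy k)) as [M [Hub Hlub]].
  - exists 0. intros x [k ->]. pose proof (energy_nonneg k). lra.
  - exists (- energy 0), 0%nat; auto.
  - exists (- M). split.
    + intros k. assert (- energy k <= M) by (apply Hub; exists k; auto). lra.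
    + intros eps He. apply NNPP. intros H. assert (M <= M - eps); [|lra]. apply Hlub. intros x [k ->].
      destruct (Rlt_le_dec (energy k) (- M + eps)); [exfalso; apply H; exists k; auto | lra].
Qed.

Definition terms_bound j := coef_norm1 (stage_terms j).

Lemma terms_bound_mono i j : (i <= j)%nat -> terms_bound i <= terms_bound j.
Proof.
  intros H. induction j as [|j IH]; [replace i with 0%nat by lia; lra|].
  destruct (Nat.eq_dec i (S j)) as [-> | Hne]; [lra|]. specialize (IH ltac:(lia)).
  unfold terms_bound in *. change (stage_terms (S j)) with ((step_coef j, - step_freq j) :: stage_terms j).
  simpl. pose proof (Cmod_ge_0 (step_coef j)). lra.
Qed.

(* The first condition makes the integers below [T] carry weight at most [1/(j+1)] in the mean
   square of a function bounded by [2 terms_bound j]. *)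
Definition good_index j T N :=
  4 * terms_bound j * terms_bound j * INR T <= INR (length (diag_seq N)) / (INR j + 1) /\
  forall i, (i <= j)%nat ->
    msq (diag_seq N) (fun n => trig_sum (stage_terms j) n - trig_sum (stage_terms i) n)%C
      <= energy i - energy j + 1 / (INR j + 1).

Lemma good_index_eventually j T : eventually (good_index j T).
Proof.
  apply filter_and.
  - destruct (INR_unbounded (4 * terms_bound j * terms_bound j * INR T * (INR j + 1))) as [M HM].
    apply (filter_imp (fun N => (M <= length (diag_seq N))%nat));
      [|apply Folner_shift1_length, Folner_shift1_diag].
    intros N HN. apply le_INR in HN. pose proof (pos_INR j).
    apply (Rmult_le_reg_r (INR j + 1)); [lra|].
    replace (INR (length (diag_seq N)) / (INR j + 1) * (INR j + 1)) with (INR (length (diag_seq N)))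
      by (field; lra).
    lra.
  - apply eventually_forall_le. intros i Hi. pose proof (msq_stage_diff_lim i j Hi) as H.
    rewrite is_lim_seq_eventually in H.
    assert (Hpos : 0 < 1 / (INR j + 1)) by (pose proof (pos_INR j); apply Rdiv_lt_0_compat; lra).
    eapply filter_imp; [|apply (H _ Hpos)]. intros N HN. apply Rlt_le, Rabs_le_inv in HN. lra.
Qed.

Lemma good_index_after j T prev : exists N, (prev < N)%nat /\ good_index j T N.
Proof.
  destruct (good_index_eventually j T) as [N HN]. exists (max N (S prev)). split; [lia | apply HN; lia].
Qed.

Definition pick_good_index j T prev :=
  proj1_sig (constructive_indefinite_description _ (good_index_after j T prev)).

Lemma pick_good_index_spec j T prev :
  (prev < pick_good_index j T prev)%nat /\ good_index j T (pick_good_index j T prev).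
Proof. unfold pick_good_index. destruct (constructive_indefinite_description _ _); auto. Qed.

(* Block [j] is [(N_j, T_j)]: the glued function is the stage-[j] partial sum on [[T_j, T_(j+1))],
   and [T_(j+1)] exceeds every element of [diag_seq N_j]. *)
Fixpoint block (j : nat) : nat * nat :=
  match j with
  | O => (pick_good_index 0 0 0, 0%nat)
  | S j =>
      let NT := block j in let T' := max (snd NT + 1) (S (list_max (diag_seq (fst NT)))) in
      (pick_good_index (S j) T' (fst NT), T')
  end.

Definition block_index j := fst (block j).
Definition block_start j := snd (block j).

Lemma block_start_succ j :
  block_start (S j) = max (block_start j + 1) (S (list_max (diag_seq (block_index j)))).
Proof. reflexivity. Qed.

Lemma block_index_good j : good_index j (block_start j) (block_index j).
Proof. destruct j; simpl; apply pick_good_index_spec. Qed.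

Lemma block_index_incr : strictly_increasing block_index.
Proof. intros j. unfold block_index at 2. simpl. apply pick_good_index_spec. Qed.

Lemma block_start_incr : strictly_increasing block_start.
Proof. intros j. rewrite block_start_succ. lia. Qed.

Lemma block_index_below x j : In x (diag_seq (block_index j)) -> (x < block_start (S j))%nat.
Proof. intros H. rewrite block_start_succ. pose proof (In_le_list_max _ _ H). lia. Qed.

Lemma block_of_exists n : exists j, (block_start j <= n < block_start (S j))%nat.
Proof.
  assert (H : forall d j, (n + 1 - j = d)%nat -> (block_start j <= n)%nat ->
            exists j', (block_start j' <= n < block_start (S j'))%nat).
  { induction d as [|d IH]; intros j Hd Hj.
    - pose proof (strictly_increasing_ge _ block_start_incr j). lia.
    - destruct (le_lt_dec (block_start (S j)) n); [|exists j; lia].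
      pose proof (strictly_increasing_ge _ block_start_incr (S j)). apply (IH (S j)); auto; lia. }
  apply (H _ 0%nat eq_refl). change (block_start 0) with 0%nat. lia.
Qed.

Definition block_of n := proj1_sig (constructive_indefinite_description _ (block_of_exists n)).

Lemma block_of_spec n : (block_start (block_of n) <= n < block_start (S (block_of n)))%nat.
Proof. unfold block_of. destruct (constructive_indefinite_description _ _); auto. Qed.

Lemma block_of_eq n j : (block_start j <= n < block_start (S j))%nat -> block_of n = j.
Proof.
  intros H. pose proof (block_of_spec n). destruct (lt_eq_lt_dec (block_of n) j) as [[Hl | He] | Hl]; auto.
  - pose proof (strictly_increasing_le _ block_start_incr (S (block_of n)) j ltac:(lia)). lia.
  - pose proof (strictly_increasing_le _ block_start_incr (S j) (block_of n) ltac:(lia)). lia.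
Qed.

Lemma block_of_lt n j : (n < block_start j)%nat -> (block_of n < j)%nat.
Proof.
  intros H. pose proof (block_of_spec n). destruct (le_lt_dec j (block_of n)) as [Hle|]; auto.
  pose proof (strictly_increasing_le _ block_start_incr j (block_of n) Hle). lia.
Qed.

Definition glued (n : nat) : C := trig_sum (stage_terms (block_of n)) n.

Definition glued_seq (j : nat) : list nat := diag_seq (block_index j).

Lemma Cnorm2_glued_sub_le i j n : (i <= j)%nat -> In n (glued_seq j) ->
  Cnorm2 (glued n - trig_sum (stage_terms i) n)%C
    <= Cnorm2 (trig_sum (stage_terms j) n - trig_sum (stage_terms i) n)%C
       + (if (n <? block_start j)%nat then 4 * terms_bound j * terms_bound j else 0).
Proof.
  intros Hij Hn. destruct (Nat.ltb_spec n (block_start j)) as [Hlt | Hge].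
  - pose proof (Cnorm2_ge_0 (trig_sum (stage_terms j) n - trig_sum (stage_terms i) n)%C).
    cut (Cnorm2 (glued n - trig_sum (stage_terms i) n)%C <= 4 * terms_bound j * terms_bound j); [lra|].
    rewrite <- Cmod_sqr. pose proof (block_of_lt n j Hlt).
    assert (Cmod (glued n - trig_sum (stage_terms i) n)%C <= 2 * terms_bound j).
    { unfold Cminus. eapply Rle_trans; [apply Cmod_triangle|]. rewrite Cmod_opp.
      pose proof (Cmod_trig_sum_le (stage_terms (block_of n)) n).
      pose proof (Cmod_trig_sum_le (stage_terms i) n).
      pose proof (terms_bound_mono (block_of n) j ltac:(lia)). pose proof (terms_bound_mono i j Hij).
      unfold glued, terms_bound in *. lra. }
    pose proof (Cmod_ge_0 (glued n - trig_sum (stage_terms i) n)%C). nra.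
  - unfold glued. rewrite (block_of_eq n j) by (split; [lia | apply block_index_below; auto]). lra.
Qed.

Lemma ravg_indicator_le A T K : NoDup A -> A <> [] -> 0 <= K ->
  ravg A (fun n => if (n <? T)%nat then K else 0) <= K * INR T / INR (length A).
Proof.
  intros HND HA HK.
  assert (Hl : 0 < INR (length A)) by (destruct A; [congruence|]; apply lt_0_INR; simpl; lia).
  assert (Hcount : (length (filter (fun n => (n <? T)%nat) A) <= T)%nat).
  { apply Nat.le_trans with (length (seq 0 T)); [|rewrite length_seq; lia].
    apply NoDup_incl_length; [apply NoDup_filter; auto|].
    intros x Hx. apply filter_In in Hx. destruct Hx as [_ Hx]. apply Nat.ltb_lt in Hx. apply in_seq. lia. }
  assert (Hsum : rsum A (fun n => if (n <? T)%nat then K else 0)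
                 = K * INR (length (filter (fun n => (n <? T)%nat) A))).
  { unfold rsum. clear. induction A; simpl; [ring|].
    destruct (a <? T)%nat; simpl length; rewrite ?S_INR, IHA; ring. }
  rewrite ravg_rsum, Hsum. unfold Rdiv. apply Rmult_le_compat_r; [left; apply Rinv_0_lt_compat; auto|].
  apply Rmult_le_compat_l, le_INR; auto.
Qed.

Lemma msq_glued_le i j : (i <= j)%nat ->
  msq (glued_seq j) (fun n => glued n - trig_sum (stage_terms i) n)%C
    <= energy i - energy j + 2 / (INR j + 1).
Proof.
  intros Hij. set (K := 4 * terms_bound j * terms_bound j).
  destruct (block_index_good j) as [G1 G2]. fold (glued_seq j) K in G1, G2. specialize (G2 i Hij).
  assert (HA : glued_seq j <> []) by apply Phi_nonempty.
  assert (HND : NoDup (glued_seq j)) by apply Folner_shift1_diag.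
  assert (Hl : 0 < INR (length (glued_seq j)))
    by (destruct (glued_seq j); [congruence|]; apply lt_0_INR; simpl; lia).
  assert (HK : 0 <= K) by (unfold K; nra).
  pose proof (pos_INR j).
  unfold msq. eapply Rle_trans; [apply ravg_le; intros n Hn; apply (Cnorm2_glued_sub_le i j n Hij Hn)|].
  rewrite ravg_plus.
  fold (msq (glued_seq j) (fun n => trig_sum (stage_terms j) n - trig_sum (stage_terms i) n)%C).
  pose proof (ravg_indicator_le (glued_seq j) (block_start j) K HND HA HK) as Hind. fold K.
  assert (K * INR (block_start j) / INR (length (glued_seq j)) <= 1 / (INR j + 1)).
  { apply (Rmult_le_reg_r (INR (length (glued_seq j)))); auto. unfold Rdiv in *.
    rewrite Rmult_assoc, Rinv_l by lra. lra. }
  replace (2 / (INR j + 1)) with (1 / (INR j + 1) + 1 / (INR j + 1)) by (field; lra). lra.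
Qed.

Lemma glued_seq_refines : eventually_refines diag_seq glued_seq.
Proof. exact (eventually_refines_subseq diag_seq block_index block_index_incr). Qed.

Lemma msq_glued_eventually_le i d : 0 < d ->
  eventually (fun j =>
    msq (glued_seq j) (fun n => glued n - trig_sum (stage_terms i) n)%C <= energy i - energy j + d).
Proof.
  intros Hd. destruct (inv_succ_eventually_lt (d / 2)) as [K HK]; [lra|]. exists (max K i). intros j Hj.
  eapply Rle_trans; [apply msq_glued_le; lia|]. specialize (HK j ltac:(lia)).
  assert (2 / (INR j + 1) = 2 * (1 / (INR j + 1))) by (unfold Rdiv; ring). lra.
Qed.

Lemma Bes_msq_glued : Bes_msq glued_seq glued.
Proof.
  intros eps He. destruct energy_inf as [m [Hm Hinf]]. destruct (Hinf (eps / 2)) as [i Hi]; [lra|].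
  exists (stage_terms i). eapply filter_imp; [|apply (msq_glued_eventually_le i (eps / 2)); lra].
  intros j Hj. pose proof (Hm j). lra.
Qed.

Lemma L2_glued : L2 glued_seq (fun n => f n - glued n)%C.
Proof.
  apply L2_iff_eventually_bounded. exists (4 * (energy 0 + 1)).
  pose proof (eventually_refines_lim _ _ (fun A => msq A (residual (stage_terms 0))) _
                glued_seq_refines (diag_energy_lim 0)) as H.
  rewrite is_lim_seq_eventually in H.
  eapply filter_imp; [|apply (filter_and _ _ (H 1 Rlt_0_1) (msq_glued_eventually_le 0 1 Rlt_0_1))].
  intros j [H1 H2]. apply Rlt_le, Rabs_le_inv in H1. pose proof (energy_nonneg j).
  eapply Rle_trans; [apply (msq_triangle _ _ _ (trig_sum (stage_terms 0)))|].
  replace (msq (glued_seq j) (fun n => trig_sum (stage_terms 0) n - glued n)%C)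
    with (msq (glued_seq j) (fun n => glued n - trig_sum (stage_terms 0) n)%C)
    by (apply ravg_ext; intros; apply Cnorm2_minus_sym).
  unfold residual in H1. lra.
Qed.

(* Since the energies converge, some stage [i] has [|c_i|^2 < eps^2/16]; if the coefficient of
   [f - glued] at [th] were frequently [>= eps], that of the stage-[i] residual would frequently be
   [>= eps/2], contradicting the greedy choice of [c_i]. *)
Lemma fourier_null_glued : fourier_null glued_seq (fun n => f n - glued n)%C.
Proof.
  intros th. eapply Clim_ext; [intros N; apply fourier_coef_frac_part|].
  assert (Hth0 : 0 <= frac_part th < 1) by (pose proof (base_fp th); lra).
  set (th0 := frac_part th) in *. apply Clim_0_of_not_frequently. intros eps He Hfreq.
  set (d := eps * eps / 16). assert (Hd : 0 < d) by (unfold d; nra).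
  destruct energy_inf as [m [Hm Hinf]]. destruct (Hinf d Hd) as [i Hi].
  assert (Hc : Cnorm2 (step_coef i) < d) by (pose proof (Hm (S i)); simpl in *; lra).
  assert (Hfr : frequently (fun N =>
            eps / 2 <= Cmod (fourier_coef (diag_seq N) (residual (stage_terms i)) th0))).
  { apply (eventually_refines_frequently diag_seq glued_seq (fun A => eps / 2 <= Cmod (fourier_coef A _ th0)));
      [apply glued_seq_refines|].
    intros N.
    destruct (eventually_frequently _ _ (msq_glued_eventually_le i d Hd) Hfreq N) as [j [Hj [H1 H2]]].
    exists j; split; auto. pose proof (Hm j).
    rewrite (fourier_coef_ext _ _ (fun n => (f n - glued n) + (glued n - trig_sum (stage_terms i) n))%C)
      by (intros; unfold residual; Cring).
    apply Cmod_fourier_coef_add_ge; auto. unfold d in *. lra. }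
  pose proof (diag_greedy_bound i th0 (eps / 2) Hth0 ltac:(lra) Hfr).
  rewrite <- Cmod_sqr in Hc. unfold d in Hc. nra.
Qed.

Lemma subseq_glued_seq : subseq_of Phi glued_seq.
Proof.
  exists (fun j => diag (block_index j)). split; [|intros; reflexivity].
  apply strictly_increasing_comp; [apply diag_incr | apply block_index_incr].
Qed.

End Greedy_extraction.

Lemma Bes_msq_decomposition Phi f : Folner Phi -> L2 Phi f ->
  exists Psi h, subseq_of Phi Psi /\ Bes_msq Psi h /\
    L2 Psi (fun n => f n - h n)%C /\ fourier_null Psi (fun n => f n - h n)%C.
Proof.
  intros HF HL. apply L2_iff_eventually_bounded in HL. destruct HL as [M HM].
  destruct (bounded_convergent_subseq (fun N => msq (Phi N) f) M) as [s [l [Hs Hl]]].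
  { eapply filter_imp; [|apply HM]. intros n Hn. rewrite Rabs_pos_eq by apply msq_nonneg. auto. }
  exists (glued_seq Phi f HF s l Hs Hl), (glued Phi f HF s l Hs Hl).
  split; [|split; [|split]].
  - apply subseq_glued_seq.
  - apply Bes_msq_glued.
  - apply L2_glued.
  - apply fourier_null_glued.
Qed.

Lemma real_range_hull (f : nat -> C) a0 b0 : (forall n, Im (f n) = 0 /\ a0 <= Re (f n) <= b0) ->
  exists lo hi, lo <= hi /\ (forall n, snd (f n) = 0 /\ lo <= fst (f n) <= hi) /\
    forall a b, (forall n, Im (f n) = 0 /\ a <= Re (f n) <= b) -> a <= lo /\ hi <= b.
Proof.
  intros Hab.
  destruct (completeness (fun x => exists n, x = Re (f n))) as [hi [Hhu Hhl]];
    [exists b0; intros x [n ->]; apply Hab | exists (Re (f 0%nat)), 0%nat; auto|].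
  destruct (completeness (fun x => exists n, x = - Re (f n))) as [mlo [Hlu Hll]];
    [exists (- a0); intros x [n ->]; destruct (Hab n); lra | exists (- Re (f 0%nat)), 0%nat; auto|].
  assert (Hin : forall n, - mlo <= Re (f n) <= hi).
  { intros n. assert (- Re (f n) <= mlo) by (apply Hlu; exists n; auto).
    assert (Re (f n) <= hi) by (apply Hhu; exists n; auto). lra. }
  exists (- mlo), hi. split; [pose proof (Hin 0%nat); lra|]. split.
  - intros n. split; [apply Hab | apply Hin].
  - intros a b H. split.
    + assert (mlo <= - a); [|lra]. apply Hll. intros x [n ->]. destruct (H n). lra.
    + apply Hhl. intros x [n ->]. apply H.
Qed.

(* For real [f] with values in [[lo, hi]], replace [h] by its clamp; the defect [h - clamp h]
   is negligible, so nothing else changes. *)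
Lemma decomposition_within_range Psi f h : Bes_msq Psi h ->
  L2 Psi (fun n => f n - h n)%C -> fourier_null Psi (fun n => f n - h n)%C ->
  exists fB, Bes_msq Psi fB /\ L2 Psi (fun n => f n - fB n)%C /\ fourier_null Psi (fun n => f n - fB n)%C /\
    forall a b : R, (forall n, Im (f n) = 0 /\ a <= Re (f n) <= b) ->
      (forall n, Im (fB n) = 0 /\ a <= Re (fB n) <= b).
Proof.
  intros HB HL HP.
  destruct (classic (exists a b, forall n, Im (f n) = 0 /\ a <= Re (f n) <= b)) as [[a0 [b0 Hab]] | Hno].
  - destruct (real_range_hull f a0 b0 Hab) as [lo [hi [Hle [Hf Hhull]]]].
    pose proof (Cclamp_correction_lim_0 Psi f h lo hi Hle Hf HB HL HP) as Hu.
    destruct (L2_fourier_null_add_negligible Psi _ _ HL HP Hu) as [HL' HP'].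
    assert (E : forall n, (f n - h n + (h n - Cclamp lo hi (h n)))%C = (f n - Cclamp lo hi (h n))%C)
      by (intros; Cring).
    exists (fun n => Cclamp lo hi (h n)). split; [apply Bes_msq_Cclamp; auto|]. split; [|split].
    + apply L2_iff_eventually_bounded. apply L2_iff_eventually_bounded in HL'.
      destruct HL' as [M HM]. exists M.
      eapply filter_imp; [|apply HM]. intros N HN. rewrite <- (msq_ext _ _ _ E). auto.
    + intros th. eapply Clim_ext; [|apply (HP' th)]. intros N. apply fourier_coef_ext; auto.
    + intros a b H n. destruct (Hhull a b H). pose proof (clamp_range lo hi (fst (h n)) Hle).
      unfold Cclamp, RtoC; simpl. split; [auto | lra].
  - exists h. split; [auto | split; [auto | split; [auto|]]].
    intros a b H. exfalso. apply Hno. exists a, b; auto.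
Qed.

Theorem theorem3p6 (Phi : nat -> list nat) (f : nat -> C) :
  Folner Phi -> L2 Phi f ->
  exists (Psi : nat -> list nat) (fBes fanti : nat -> C),
    subseq_of Phi Psi /\
    Bes Psi fBes /\ Bes_perp Psi fanti /\
    (forall n, f n = Cplus (fBes n) (fanti n)) /\
    Phinorm Psi (fun n => Cminus (f n) (fBes n)) =
      Glb_Rbar (fun r => exists g, Bes Psi g /\
                  Phinorm Psi (fun n => Cminus (f n) (g n)) = Finite r) /\
    (forall a b : R,
       (forall n, Im (f n) = 0 /\ a <= Re (f n) <= b) ->
       (forall n, Im (fBes n) = 0 /\ a <= Re (fBes n) <= b)).
Proof.
  intros HF HL.
  destruct (Bes_msq_decomposition Phi f HF HL) as [Psi1 [h [Hsub [HB [HL1 HP]]]]].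
  destruct (decomposition_within_range Psi1 f h HB HL1 HP) as [fB [HB' [HL' [HP' Hrange]]]].
  destruct (L2_bound _ _ HL') as [M [_ HM]].
  destruct (bounded_convergent_subseq (fun N => msq (Psi1 N) (fun n => f n - fB n)%C) M) as [s [l [Hs Hl]]].
  { eapply filter_imp; [|apply HM]. intros N HN. rewrite Rabs_pos_eq by apply msq_nonneg. auto. }
  assert (HT : eventually_refines Psi1 (fun N => Psi1 (s N))) by (apply eventually_refines_subseq; auto).
  exists (fun N => Psi1 (s N)), fB, (fun n => f n - fB n)%C.
  split; [|split; [|split; [|split; [|split]]]].
  - destruct Hsub as [t [Ht E]]. exists (fun N => t (s N)).
    split; [apply strictly_increasing_comp; auto | intros; apply E].
  - apply Bes_iff_Bes_msq, (Bes_msq_refines Psi1); auto.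
  - apply Bes_perp_of_fourier_null; [apply (L2_refines Psi1) | apply (fourier_null_refines Psi1)]; auto.
  - intros n. Cring.
  - apply Phinorm_best_approx with l; auto.
    + apply (Bes_msq_refines Psi1); auto.
    + apply (L2_refines Psi1); auto.
    + apply (fourier_null_refines Psi1); auto.
  - exact Hrange.
Qed.
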